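(* Let $k\ge1$ be an integer and $\alpha>\beta>0$. Then $$ \int_{-1}^1(1-x)^{\alpha+1}(1+x)^{\beta+1}W(x)\,dx=\frac{(\rho^2-\eta^2)(\rho^2-\sigma^2)}{\rho(\rho-1)}\,{\bf h}_k^2 . $$
   Context: $y=P_k^{(\alpha,\beta)}(x)$ is the Jacobi polynomial in the standard (Szegő) normalization, orthogonal on $[-1,1]$ with weight $(1-x)^\alpha(1+x)^\beta$, with squared norm ${\bf h}_k^2=\frac{2^{\alpha+\beta+1}\Gamma(k+\alpha+1)\Gamma(k+\beta+1)}{(2k+\alpha+\beta+1)\,k!\,\Gamma(k+\alpha+\beta+1)}$. Put $\eta=\alpha-\beta$, $\sigma=\alpha+\beta$, $\rho=2k+\alpha+\beta$, and $$W(x)=(\rho^2-\sigma^2)y^2-4(\eta+\sigma x)yy'+4(1-x^2)y'^2 .$$ *)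

From Stdlib Require Import Reals.
From Coquelicot Require Import Coquelicot.
Open Scope R_scope.

(* Real power x^a for x >= 0, with the convention 0^a = 0 (a > 0 in our uses). *)
Definition rpow (x a : R) : R :=
  match Rlt_dec 0 x with left _ => Rpower x a | right _ => 0 end.

Definition Gamma (s : R) : R :=
  RInt_gen (fun t => rpow t (s - 1) * exp (- t)) (at_right 0) (Rbar_locally p_infty).

Fixpoint falling (a : R) (j : nat) : R :=
  match j with
  | O => 1
  | S j' => falling a j' * (a - INR j')
  end.

Definition gbinom (a : R) (j : nat) : R := falling a j / INR (Factorial.fact j).

(* Jacobi polynomial, standard (Szego) normalization, Szego (4.3.2):
   P_k^(al,be)(x) = sum_{m=0}^k binom(k+al, k-m) binom(k+be, m) ((x-1)/2)^m ((x+1)/2)^(k-m) *)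
Definition jacobiP (k : nat) (al be : R) (x : R) : R :=
  sum_f_R0 (fun m => gbinom (INR k + al) (k - m) * gbinom (INR k + be) m
                     * ((x - 1) / 2) ^ m * ((x + 1) / 2) ^ (k - m)) k.

Definition hk2 (k : nat) (al be : R) : R :=
  Rpower 2 (al + be + 1) * Gamma (INR k + al + 1) * Gamma (INR k + be + 1)
  / ((2 * INR k + al + be + 1) * INR (Factorial.fact k) * Gamma (INR k + al + be + 1)).

Definition eta_ (al be : R) : R := al - be.
Definition sigma_ (al be : R) : R := al + be.
Definition rho_ (k : nat) (al be : R) : R := 2 * INR k + al + be.

Definition W (k : nat) (al be : R) (x : R) : R :=
  let y := jacobiP k al be x in
  let y' := Derive (jacobiP k al be) x in
  (rho_ k al be ^ 2 - sigma_ al be ^ 2) * y ^ 2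
  - 4 * (eta_ al be + sigma_ al be * x) * y * y'
  + 4 * (1 - x ^ 2) * y' ^ 2.

From Stdlib Require Import Reals Lra Lia Psatz Classical.
From Coquelicot Require Import Coquelicot.
Open Scope R_scope.

(* The weight (1-x)^(a+1) (1+x)^(b+1) is (1-x^2) w with w = (1-x)^a (1+x)^b.  Using the Jacobi
   differential equation, (1-x^2) W equals y^2 Q for an explicit quadratic Q, up to two terms of the
   form w^(-1) (w (1-x^2) p)', which integrate to zero.  As y is orthogonal to all polynomials of
   lower degree, only its three leading monomial coefficients and the moments of w y x^(k+j),
   j = 0, 1, 2, survive; the Rodrigues formula turns these moments into Beta integrals.  The Beta
   integral is finally expressed through Gamma via n^(s+1) B(s+1, n+c+1) -> Gamma(s+1). *)

(** * Real powers *)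

Lemma rpow_Rpower x s : 0 < x -> rpow x s = Rpower x s.
Proof. intros H; unfold rpow; destruct (Rlt_dec 0 x); [reflexivity|lra]. Qed.

Lemma rpow_nonpos x s : x <= 0 -> rpow x s = 0.
Proof. intros H; unfold rpow; destruct (Rlt_dec 0 x); [lra|reflexivity]. Qed.

Lemma rpow_ge0 x s : 0 <= rpow x s.
Proof. unfold rpow; destruct (Rlt_dec 0 x); [left; apply exp_pos|lra]. Qed.

Lemma rpow_gt0 x s : 0 < x -> 0 < rpow x s.
Proof. intros H; rewrite rpow_Rpower by lra; apply exp_pos. Qed.

Lemma rpow_plus x s t : 0 <= x -> rpow x (s + t) = rpow x s * rpow x t.
Proof.
  intros H; destruct (Rle_lt_or_eq_dec 0 x H) as [H'|<-].
  - rewrite !rpow_Rpower by lra; apply Rpower_plus.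
  - rewrite !rpow_nonpos by lra; ring.
Qed.

Lemma rpow_1 x : 0 <= x -> rpow x 1 = x.
Proof.
  intros H; destruct (Rle_lt_or_eq_dec 0 x H) as [H'|<-].
  - rewrite rpow_Rpower by lra; apply Rpower_1; lra.
  - rewrite rpow_nonpos by lra; ring.
Qed.

Lemma rpow_plus1 x s : 0 <= x -> rpow x (s + 1) = rpow x s * x.
Proof. intros H; rewrite rpow_plus, rpow_1; auto. Qed.

Lemma rpow_1_l s : rpow 1 s = 1.
Proof. rewrite rpow_Rpower by lra. unfold Rpower. rewrite ln_1, Rmult_0_r. apply exp_0. Qed.

Lemma rpow_mult x y s : 0 <= x -> 0 <= y -> rpow (x * y) s = rpow x s * rpow y s.
Proof.
  intros Hx Hy.
  destruct (Rle_lt_or_eq_dec 0 x Hx) as [Hx'|<-];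
    [|rewrite Rmult_0_l, !(rpow_nonpos 0) by lra; ring].
  destruct (Rle_lt_or_eq_dec 0 y Hy) as [Hy'|<-];
    [|rewrite Rmult_0_r, !(rpow_nonpos 0) by lra; ring].
  rewrite !rpow_Rpower by nra. symmetry; apply Rpower_mult_distr; lra.
Qed.

Lemma rpow_INR x n : 0 < x -> rpow x (INR n) = x ^ n.
Proof. intros H; rewrite rpow_Rpower by lra; apply Rpower_pow; lra. Qed.

Lemma exp_le x y : x <= y -> exp x <= exp y.
Proof. intros [H|H]; [left; apply exp_increasing; auto|rewrite H; lra]. Qed.

Lemma rpow_le_exponent y s t : 0 <= y <= 1 -> s <= t -> rpow y t <= rpow y s.
Proof.
  intros Hy Hst. destruct (Req_dec y 0) as [->|Hy0].
  - rewrite !(rpow_nonpos 0) by lra. lra.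
  - rewrite !rpow_Rpower by lra. unfold Rpower.
    assert (ln y <= 0).
    { destruct (Req_dec y 1) as [->|Hy1]; [rewrite ln_1; lra|].
      left. rewrite <- ln_1. apply ln_increasing; lra. }
    apply exp_le. nra.
Qed.

Lemma rpow_le1 y s : 0 <= y <= 1 -> 0 <= s -> rpow y s <= 1.
Proof.
  intros Hy Hs. destruct (Req_dec y 0) as [->|Hy0]; [rewrite rpow_nonpos by lra; lra|].
  apply (Rle_trans _ (rpow y 0)); [apply rpow_le_exponent; lra|].
  rewrite rpow_Rpower, Rpower_O by lra. lra.
Qed.

Lemma rpow_small s eps : 0 < s -> 0 < eps ->
  exists del, 0 < del /\ forall h, Rabs h < del -> rpow h s < eps.
Proof.
  intros Hs He. exists (Rpower eps (/ s)). split; [apply exp_pos|].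
  intros h Hh. destruct (Rle_or_lt h 0) as [H0|H0].
  - rewrite rpow_nonpos by lra; lra.
  - rewrite rpow_Rpower by lra. rewrite Rabs_right in Hh by lra.
    replace eps with (Rpower (Rpower eps (/ s)) s).
    + apply Rlt_Rpower_l; auto.
    + rewrite Rpower_mult, Rinv_l by lra. apply Rpower_1; lra.
Qed.

Lemma locally_pos x : 0 < x -> locally x (fun t => 0 < t).
Proof.
  intros Hx. exists (mkposreal x Hx). intros t Ht.
  unfold ball in Ht; simpl in Ht; unfold AbsRing_ball, abs, minus, plus, opp in Ht; simpl in Ht.
  unfold Rabs in Ht; destruct (Rcase_abs _); lra.
Qed.

Lemma locally_neg x : x < 0 -> locally x (fun t => t < 0).
Proof.
  intros Hx. exists (mkposreal (- x) ltac:(lra)). intros t Ht.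
  unfold ball in Ht; simpl in Ht; unfold AbsRing_ball, abs, minus, plus, opp in Ht; simpl in Ht.
  unfold Rabs in Ht; destruct (Rcase_abs _); lra.
Qed.

Lemma continuous_of_ex_derive (f : R -> R) x : ex_derive f x -> continuous f x.
Proof. apply (ex_derive_continuous (K:=R_AbsRing) (V:=R_NormedModule)). Qed.

Lemma is_derive_rpow_pos s x : 0 < x -> is_derive (fun t => rpow t s) x (s * rpow x (s - 1)).
Proof.
  intros Hx. rewrite rpow_Rpower by auto.
  apply (is_derive_ext_loc (fun t => Rpower t s)).
  - apply (filter_imp (fun t => 0 < t)); [|apply locally_pos; auto].
    intros t Ht; rewrite rpow_Rpower; auto.
  - apply is_derive_Reals, derivable_pt_lim_power; auto.
Qed.

Lemma continuous_rpow s x : 0 < s -> continuous (fun t => rpow t s) x.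
Proof.
  intros Hs. destruct (Rtotal_order x 0) as [Hx|[->|Hx]].
  - apply (continuous_ext_loc _ (fun _ => 0)); [|apply continuous_const].
    apply (filter_imp (fun t => t < 0)); [|apply locally_neg; auto].
    intros t Ht; rewrite rpow_nonpos; lra.
  - apply continuity_pt_filterlim. intros eps Heps.
    destruct (rpow_small s eps Hs Heps) as [d [Hd H]].
    exists d; split; auto. intros y [_ Hy]. simpl in *. unfold R_dist in *.
    rewrite (rpow_nonpos 0), Rminus_0_r, Rabs_right by (lra || apply Rle_ge, rpow_ge0).
    rewrite Rminus_0_r in Hy. auto.
  - apply continuous_of_ex_derive. eexists. apply is_derive_rpow_pos; auto.
Qed.

Lemma is_derive_rpow s x : 1 < s -> is_derive (fun t => rpow t s) x (s * rpow x (s - 1)).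
Proof.
  intros Hs. destruct (Rtotal_order x 0) as [Hx|[->|Hx]].
  - rewrite (rpow_nonpos x), Rmult_0_r by lra.
    apply (is_derive_ext_loc (fun _ => 0)); [|apply (is_derive_const (V:=R_NormedModule))].
    apply (filter_imp (fun t => t < 0)); [|apply locally_neg; auto].
    intros t Ht; rewrite rpow_nonpos; lra.
  - rewrite (rpow_nonpos 0), Rmult_0_r by lra.
    apply is_derive_Reals. intros eps Heps.
    destruct (rpow_small (s - 1) eps ltac:(lra) Heps) as [d [Hd H]].
    exists (mkposreal d Hd). intros h Hh0 Hh. simpl in Hh.
    rewrite Rplus_0_l, (rpow_nonpos 0), !Rminus_0_r by lra.
    destruct (Rle_or_lt h 0) as [H0|H0].
    + rewrite rpow_nonpos by lra. unfold Rdiv; rewrite Rmult_0_l, Rabs_R0; auto.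
    + replace s with ((s - 1) + 1) at 1 by ring. rewrite rpow_plus1 by lra.
      unfold Rdiv; rewrite Rmult_assoc, Rinv_r, Rmult_1_r by lra.
      rewrite Rabs_right by (apply Rle_ge, rpow_ge0). apply H; auto.
  - apply is_derive_rpow_pos; auto.
Qed.

Lemma is_derive_rpow_comp (f : R -> R) df s x : 0 < s -> is_derive f x df ->
  is_derive (fun y => rpow (f y) (s + 1)) x ((s + 1) * rpow (f x) s * df).
Proof.
  intros Hs Hf.
  replace ((s + 1) * rpow (f x) s * df) with (scal df ((s + 1) * rpow (f x) (s + 1 - 1)))
    by (unfold scal; simpl; unfold mult; simpl; replace (s + 1 - 1) with s by ring; ring).
  apply (is_derive_comp (fun t => rpow t (s + 1)) f); auto.
  apply is_derive_rpow; lra.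
Qed.

Lemma is_derive_Rmult (f g : R -> R) df dg x : is_derive f x df -> is_derive g x dg ->
  is_derive (fun t => f t * g t) x (df * g x + f x * dg).
Proof. intros Hf Hg. apply (is_derive_mult f g); auto. intros; apply Rmult_comm. Qed.

Lemma continuous_Rplus (f g : R -> R) x :
  continuous f x -> continuous g x -> continuous (fun y => f y + g y) x.
Proof. intros; apply (continuous_plus f g); auto. Qed.

Lemma continuous_Rmult (f g : R -> R) x :
  continuous f x -> continuous g x -> continuous (fun y => f y * g y) x.
Proof. intros; apply (continuous_mult f g); auto. Qed.

Lemma continuous_rpow_comp (f : R -> R) s x :
  0 < s -> continuous f x -> continuous (fun y => rpow (f y) s) x.
Proof. intros Hs Hf. apply (continuous_comp f (fun t => rpow t s)); auto. apply continuous_rpow; auto. Qed.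

Definition continuous_all (f : R -> R) : Prop := forall x, continuous f x.

Lemma continuous_all_plus f g :
  continuous_all f -> continuous_all g -> continuous_all (fun x => f x + g x).
Proof. intros Hf Hg x; apply continuous_Rplus; auto. Qed.

Lemma continuous_all_mult f g :
  continuous_all f -> continuous_all g -> continuous_all (fun x => f x * g x).
Proof. intros Hf Hg x; apply continuous_Rmult; auto. Qed.

Lemma continuous_all_opp f : continuous_all f -> continuous_all (fun x => - f x).
Proof. intros H x. apply (continuous_opp f); auto. Qed.

Lemma continuous_all_minus f g :
  continuous_all f -> continuous_all g -> continuous_all (fun x => f x - g x).
Proof. intros. apply continuous_all_plus; auto. apply continuous_all_opp; auto. Qed.

Lemma continuous_all_const c : continuous_all (fun _ => c).
Proof. intros x; apply continuous_const. Qed.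

Lemma continuous_all_id : continuous_all (fun x => x).
Proof. intros x; apply continuous_id. Qed.

Lemma continuous_all_pow f n : continuous_all f -> continuous_all (fun x => f x ^ n).
Proof.
  intros H. induction n; simpl.
  - apply continuous_all_const.
  - apply continuous_all_mult; auto.
Qed.

Lemma continuous_all_sum (f : nat -> R -> R) n :
  (forall m, continuous_all (f m)) -> continuous_all (fun x => sum_f_R0 (fun m => f m x) n).
Proof. intros H. induction n; simpl; auto. apply continuous_all_plus; auto. Qed.

Lemma continuous_all_rpow_1m s : 0 < s -> continuous_all (fun y => rpow (1 - y) s).
Proof. intros Hs y. apply continuous_rpow_comp; auto. apply continuous_of_ex_derive; auto_derive; auto. Qed.

Lemma continuous_all_rpow_1p s : 0 < s -> continuous_all (fun y => rpow (1 + y) s).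
Proof. intros Hs y. apply continuous_rpow_comp; auto. apply continuous_of_ex_derive; auto_derive; auto. Qed.

Ltac solve_continuity := match goal with
 | |- continuous_all (fun x => @?f x + @?g x) => apply (continuous_all_plus f g); solve_continuity
 | |- continuous_all (fun x => @?f x - @?g x) => apply (continuous_all_minus f g); solve_continuity
 | |- continuous_all (fun x => @?f x * @?g x) => apply (continuous_all_mult f g); solve_continuity
 | |- continuous_all (fun x => - @?f x) => apply (continuous_all_opp f); solve_continuity
 | |- continuous_all (fun x => x ^ ?n) => apply (continuous_all_pow (fun x => x) n), continuous_all_id
 | |- continuous_all (fun x => @?f x ^ ?n) => apply (continuous_all_pow f n); solve_continuity
 | |- continuous_all (fun x => x) => apply continuous_all_id
 | |- continuous_all (Rmult ?c) => apply (continuous_all_mult (fun _ => c) (fun x => x)); solve_continuity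
 | |- continuous_all (fun x => ?c) => apply continuous_all_const
 | |- continuous_all (fun x => ?f x) => assumption
 | |- continuous_all ?f => assumption
 | |- _ => idtac
end.

Lemma ex_RInt_continuous_all (f : R -> R) a b : continuous_all f -> ex_RInt f a b.
Proof. intros H. apply (ex_RInt_continuous (V:=R_CompleteNormedModule)). intros; apply H. Qed.

Lemma RInt_plus_R (f g : R -> R) a b : ex_RInt f a b -> ex_RInt g a b ->
  RInt (fun x => f x + g x) a b = RInt f a b + RInt g a b.
Proof. intros; apply (RInt_plus (V:=R_CompleteNormedModule)); auto. Qed.

Lemma RInt_minus_R (f g : R -> R) a b : ex_RInt f a b -> ex_RInt g a b ->
  RInt (fun x => f x - g x) a b = RInt f a b - RInt g a b.
Proof. intros; apply (RInt_minus (V:=R_CompleteNormedModule)); auto. Qed.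

Lemma RInt_scal_R (f : R -> R) a b c : ex_RInt f a b ->
  RInt (fun x => c * f x) a b = c * RInt f a b.
Proof. intros; apply (RInt_scal (V:=R_CompleteNormedModule)); auto. Qed.

Lemma RInt_ext_R (f g : R -> R) a b : a <= b -> (forall x, a < x < b -> f x = g x) ->
  RInt f a b = RInt g a b.
Proof.
  intros Hab H. apply RInt_ext. intros x Hx.
  rewrite Rmin_left in Hx by lra. rewrite Rmax_right in Hx by lra. auto.
Qed.

Lemma RInt_derive_vanishing (G g : R -> R) a b :
  (forall x, is_derive G x (g x)) -> continuous_all g -> G a = 0 -> G b = 0 ->
  RInt g a b = 0.
Proof.
  intros Hd Hc Ha Hb.
  assert (HI := is_RInt_derive G g a b (fun x _ => Hd x) (fun x _ => Hc x)).
  apply is_RInt_unique in HI. rewrite HI, Ha, Hb.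
  unfold minus, plus, opp; simpl. ring.
Qed.

(** * Jacobi polynomials: derivatives and the differential equation *)

Definition uv_sum (n : nat) (c : nat -> R) (x : R) : R :=
  sum_f_R0 (fun m => c m * ((x - 1) / 2) ^ m * ((x + 1) / 2) ^ (n - m)) n.

Definition uv_sum_deriv (n : nat) (c : nat -> R) (x : R) : R :=
  / 2 * sum_f_R0 (fun m => c m * (INR m * ((x - 1) / 2) ^ (pred m) * ((x + 1) / 2) ^ (n - m)
        + INR (n - m) * ((x - 1) / 2) ^ m * ((x + 1) / 2) ^ (pred (n - m)))) n.

Definition jacobi_coef (k : nat) (a b : R) (m : nat) : R :=
  gbinom (INR k + a) (k - m) * gbinom (INR k + b) m.

Lemma jacobiP_uv_sum k a b x : jacobiP k a b x = uv_sum k (jacobi_coef k a b) x.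
Proof. reflexivity. Qed.

Lemma sum_scal_l (c : R) (f : nat -> R) n : sum_f_R0 (fun i => c * f i) n = c * sum_f_R0 f n.
Proof. induction n; simpl; [ring|rewrite IHn; ring]. Qed.

Lemma is_derive_sum (f : nat -> R -> R) (df : nat -> R) n x :
  (forall m, is_derive (f m) x (df m)) ->
  is_derive (fun y => sum_f_R0 (fun m => f m y) n) x (sum_f_R0 df n).
Proof.
  intros H. induction n as [|n IH]; simpl; auto.
  apply (is_derive_plus (fun y => sum_f_R0 (fun m => f m y) n) (f (S n))); auto.
Qed.

Lemma is_derive_uv_sum n c x : is_derive (uv_sum n c) x (uv_sum_deriv n c x).
Proof.
  unfold uv_sum_deriv. rewrite scal_sum.
  apply is_derive_sum. intros m. auto_derive; auto. unfold Rdiv, Rminus. ring.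
Qed.

Lemma uv_sum_deriv_S k c x :
  uv_sum_deriv (S k) c x = / 2 * uv_sum k (fun m => c (S m) * INR (S m) + c m * INR (S k - m)) x.
Proof.
  unfold uv_sum_deriv, uv_sum. f_equal.
  rewrite (sum_eq _ (fun m => c m * INR m * ((x - 1) / 2) ^ (pred m) * ((x + 1) / 2) ^ (S k - m)
      + c m * INR (S k - m) * ((x - 1) / 2) ^ m * ((x + 1) / 2) ^ (pred (S k - m))))
    by (intros; ring).
  rewrite sum_plus, decomp_sum, tech5 by lia.
  rewrite Nat.sub_diag. simpl (INR 0). rewrite !Rmult_0_r, !Rmult_0_l, Rplus_0_l, Rplus_0_r.
  rewrite <- sum_plus. apply sum_eq. intros i Hi.
  replace (S k - S i)%nat with (k - i)%nat by lia.
  replace (pred (S k - i)) with (k - i)%nat by lia.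
  simpl pred. ring.
Qed.

Lemma continuous_all_uv_sum n c : continuous_all (uv_sum n c).
Proof. intros x; apply continuous_of_ex_derive; eexists; apply is_derive_uv_sum. Qed.

Lemma continuous_all_uv_sum_deriv n c : continuous_all (uv_sum_deriv n c).
Proof.
  unfold uv_sum_deriv. apply (continuous_all_mult (fun _ => / 2)); [apply continuous_all_const|].
  apply (continuous_all_sum (fun m y => c m * (INR m * ((y - 1) / 2) ^ pred m * ((y + 1) / 2) ^ (n - m) +
          INR (n - m) * ((y - 1) / 2) ^ m * ((y + 1) / 2) ^ pred (n - m)))).
  intros m y. apply continuous_of_ex_derive. auto_derive; auto.
Qed.

Lemma gbinom_0 N : gbinom N 0 = 1.
Proof. unfold gbinom; simpl; field. Qed.

Lemma gbinom_1 N : gbinom N 1 = N.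
Proof. unfold gbinom; simpl. field. Qed.

Lemma gbinom_2 N : gbinom N 2 = N * (N - 1) / 2.
Proof. unfold gbinom; simpl. field. Qed.

Lemma gbinom_S N j : gbinom N (S j) = gbinom N j * (N - INR j) / INR (S j).
Proof.
  unfold gbinom. simpl falling. rewrite fact_simpl, mult_INR.
  assert (INR (Factorial.fact j) <> 0) by apply INR_fact_neq_0.
  assert (INR (S j) <> 0) by (apply not_0_INR; lia).
  field; auto.
Qed.

Definition jacobiD (k : nat) (a b x : R) : R := uv_sum_deriv k (jacobi_coef k a b) x.

Lemma is_derive_jacobiP k a b x : is_derive (jacobiP k a b) x (jacobiD k a b x).
Proof. apply is_derive_uv_sum. Qed.

Lemma Derive_jacobiP k a b x : Derive (jacobiP k a b) x = jacobiD k a b x.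
Proof. apply is_derive_unique, is_derive_jacobiP. Qed.

Lemma continuous_all_jacobiP k a b : continuous_all (jacobiP k a b).
Proof. apply continuous_all_uv_sum. Qed.

Lemma continuous_all_jacobiD k a b : continuous_all (jacobiD k a b).
Proof. apply continuous_all_uv_sum_deriv. Qed.

Lemma jacobiD_S k a b x :
  jacobiD (S k) a b x = (INR k + a + b + 2) / 2 * jacobiP k (a + 1) (b + 1) x.
Proof.
  unfold jacobiD. rewrite uv_sum_deriv_S, jacobiP_uv_sum. unfold uv_sum.
  rewrite <- !sum_scal_l. apply sum_eq. intros m Hm. unfold jacobi_coef.
  replace (INR (S k) + a) with (INR k + (a + 1)) by (rewrite S_INR; ring).
  replace (INR (S k) + b) with (INR k + (b + 1)) by (rewrite S_INR; ring).
  replace (S k - S m)%nat with (k - m)%nat by lia.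
  replace (S k - m)%nat with (S (k - m)) by lia.
  rewrite !gbinom_S, minus_INR, !S_INR by lia.
  assert (INR m + 1 <> 0) by (generalize (pos_INR m); lra).
  assert (INR k - INR m + 1 <> 0) by (rewrite <- minus_INR by lia; generalize (pos_INR (k - m)); lra).
  field; repeat split; auto; generalize (pos_INR (k - m)); lra.
Qed.

Definition jtau (a b x : R) : R := (b - a) - (a + b + 2) * x.

Section Rodrigues.

Variables (k : nat) (a b : R).

(* In the basis u^m v^(k+1-m), u = (x-1)/2, v = (x+1)/2, the left-hand side of
   [jacobi_rodrigues_step] has coefficient [rodrigues_v m + rodrigues_u m]. *)
Definition rodrigues_v (m : nat) : R :=
  if (m <=? k)%nat then jacobi_coef k (a + 1) (b + 1) m * (INR m + a + 1) else 0.

Definition rodrigues_u (m : nat) : R :=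
  match m with O => 0 | S j => jacobi_coef k (a + 1) (b + 1) j * (INR (S k) + b - INR j) end.

Lemma rodrigues_coef m : (m <= S k)%nat ->
  rodrigues_v m + rodrigues_u m = INR (S k) * jacobi_coef (S k) a b m.
Proof.
  intros Hm. unfold rodrigues_v, rodrigues_u, jacobi_coef.
  replace (INR (S k) + a) with (INR k + (a + 1)) by (rewrite S_INR; ring).
  replace (INR (S k) + b) with (INR k + (b + 1)) by (rewrite S_INR; ring).
  destruct m as [|j].
  - simpl (0 <=? k)%nat. rewrite !Nat.sub_0_r, gbinom_S, !gbinom_0, !S_INR.
    simpl INR. field. generalize (pos_INR k); lra.
  - destruct (Nat.eq_dec j k) as [->|Hjk].
    + replace (S k <=? k)%nat with false by (symmetry; apply Nat.leb_gt; lia).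
      rewrite !Nat.sub_diag, gbinom_S, !gbinom_0, !S_INR. field.
      generalize (pos_INR k); lra.
    + replace (S j <=? k)%nat with true by (symmetry; apply Nat.leb_le; lia).
      replace (S k - S j)%nat with (S (k - S j)) by lia.
      replace (k - j)%nat with (S (k - S j)) by lia.
      rewrite !gbinom_S, !S_INR, minus_INR, S_INR by lia.
      assert (INR j + 1 <> 0) by (generalize (pos_INR j); lra).
      assert (INR k - (INR j + 1) + 1 <> 0) by (assert (INR j < INR k) by (apply lt_INR; lia); lra).
      field; auto.
Qed.

Lemma rodrigues_term x m : (m <= k)%nat ->
  let u := (x - 1) / 2 in let v := (x + 1) / 2 in
  (1 - x ^ 2) * (/ 2 * (jacobi_coef k (a + 1) (b + 1) m * (INR m * u ^ (pred m) * v ^ (k - m)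
      + INR (k - m) * u ^ m * v ^ (pred (k - m)))))
  + jtau a b x * (jacobi_coef k (a + 1) (b + 1) m * u ^ m * v ^ (k - m))
  = -2 * (rodrigues_v m * u ^ m * v ^ (S k - m) + rodrigues_u (S m) * u ^ (S m) * v ^ (S k - S m)).
Proof.
  intros Hm u v. unfold rodrigues_v, rodrigues_u, jtau.
  replace (m <=? k)%nat with true by (symmetry; apply Nat.leb_le; lia).
  replace (S k - S m)%nat with (k - m)%nat by lia.
  replace (S k - m)%nat with (S (k - m)) by lia.
  assert (Hu : INR m * u ^ pred m * u = INR m * u ^ m) by (destruct m; simpl; ring).
  assert (Hv : INR (k - m) * v ^ pred (k - m) * v = INR (k - m) * v ^ (k - m))
    by (destruct (k - m)%nat; simpl; ring).
  assert (Hx : 1 - x ^ 2 = -4 * u * v) by (unfold u, v; field).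
  assert (Hx2 : x = u + v) by (unfold u, v; field).
  assert (Hx3 : 1 = v - u) by (unfold u, v; field).
  rewrite minus_INR in * by lia.
  rewrite Hx. simpl pow.
  transitivity (-2 * jacobi_coef k (a + 1) (b + 1) m * (INR m * u ^ pred m * u * v ^ (k - m) * v
    + (INR k - INR m) * v ^ pred (k - m) * v * u ^ m * u
    + ((a + 1) * v + (b + 1) * u) * u ^ m * v ^ (k - m))).
  { rewrite Hx2 at 1.
    replace (b - a) with ((b + 1) * (v - u) - (a + 1) * (v - u)) by (rewrite <- Hx3; ring).
    field. }
  rewrite Hu, Hv, S_INR. ring.
Qed.

Lemma jacobi_rodrigues_step x :
  (1 - x ^ 2) * jacobiD k (a + 1) (b + 1) x + jtau a b x * jacobiP k (a + 1) (b + 1) x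
  = -2 * INR (S k) * jacobiP (S k) a b x.
Proof.
  unfold jacobiD, uv_sum_deriv. rewrite !jacobiP_uv_sum. unfold uv_sum.
  set (u := (x - 1) / 2). set (v := (x + 1) / 2).
  transitivity (sum_f_R0 (fun m => -2 * (rodrigues_v m * u ^ m * v ^ (S k - m)
       + rodrigues_u (S m) * u ^ (S m) * v ^ (S k - S m))) k).
  { assert (T := rodrigues_term x); cbv zeta in T; fold u v in T.
    rewrite <- (sum_eq _ _ k T), sum_plus. f_equal.
    - rewrite <- (sum_scal_l (/2)), <- (sum_scal_l (1 - x^2)). apply sum_eq; intros; ring.
    - rewrite <- sum_scal_l. apply sum_eq; intros; ring. }
  rewrite sum_scal_l, Rmult_assoc, <- (sum_scal_l (INR (S k))). f_equal.
  rewrite (sum_eq (fun i => INR (S k) * (jacobi_coef (S k) a b i * u ^ i * v ^ (S k - i)))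
                  (fun i => rodrigues_v i * u ^ i * v ^ (S k - i) + rodrigues_u i * u ^ i * v ^ (S k - i))).
  2:{ intros i Hi. rewrite <- Rmult_assoc, <- Rmult_assoc, <- rodrigues_coef by auto; ring. }
  rewrite !sum_plus. f_equal.
  - rewrite tech5. replace (rodrigues_v (S k)) with 0; [ring|].
    unfold rodrigues_v. replace (S k <=? k)%nat with false by (symmetry; apply Nat.leb_gt; lia).
    reflexivity.
  - rewrite (decomp_sum _ (S k)) by lia. simpl (rodrigues_u 0). rewrite !Rmult_0_l, Rplus_0_l. reflexivity.
Qed.

End Rodrigues.

Definition jacobiD2 (k : nat) (a b x : R) : R :=
  match k with O => 0 | S k' => (INR k' + a + b + 2) / 2 * jacobiD k' (a + 1) (b + 1) x end.

Lemma jacobiD_0 a b x : jacobiD 0 a b x = 0.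
Proof. unfold jacobiD, uv_sum_deriv. simpl. ring. Qed.

Lemma is_derive_jacobiD k a b x : is_derive (jacobiD k a b) x (jacobiD2 k a b x).
Proof.
  destruct k as [|k].
  - apply (is_derive_ext (fun _ => 0)); [intros; symmetry; apply jacobiD_0|].
    apply (is_derive_const (V:=R_NormedModule)).
  - apply (is_derive_ext (fun t => (INR k + a + b + 2) / 2 * jacobiP k (a + 1) (b + 1) t)).
    { intros t. symmetry. apply jacobiD_S. }
    apply (is_derive_scal (fun t => jacobiP k (a + 1) (b + 1) t)), is_derive_jacobiP.
Qed.

Lemma continuous_all_jacobiD2 k a b : continuous_all (jacobiD2 k a b).
Proof.
  destruct k; simpl; [apply continuous_all_const|].
  apply (continuous_all_mult (fun _ => _)); [apply continuous_all_const|apply continuous_all_jacobiD].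
Qed.

Definition jacobi_eigen (k : nat) (a b : R) : R := INR k * (INR k + a + b + 1).

Lemma jacobi_ode k a b x :
  (1 - x ^ 2) * jacobiD2 k a b x + jtau a b x * jacobiD k a b x + jacobi_eigen k a b * jacobiP k a b x = 0.
Proof.
  unfold jacobi_eigen. destruct k as [|k].
  - rewrite jacobiD_0. simpl. ring.
  - simpl jacobiD2. rewrite jacobiD_S.
    transitivity ((INR k + a + b + 2) / 2 * ((1 - x ^ 2) * jacobiD k (a + 1) (b + 1) x
      + jtau a b x * jacobiP k (a + 1) (b + 1) x) + INR (S k) * (INR (S k) + a + b + 1) * jacobiP (S k) a b x).
    { ring. }
    rewrite jacobi_rodrigues_step, S_INR. field.
Qed.

(** * Monomial coefficients of Jacobi polynomials *)

(* Obtained by integrating [jacobiD_S] termwise; the constant term is the value at 0. *)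
Fixpoint jacobi_mcoef (k : nat) (a b : R) (i : nat) {struct k} : R :=
  match k with
  | O => match i with O => 1 | S _ => 0 end
  | S k' => match i with
            | O => jacobiP (S k') a b 0
            | S i' => (INR k' + a + b + 2) / 2 / INR (S i') * jacobi_mcoef k' (a + 1) (b + 1) i'
            end
  end.

Lemma jacobiP_0 a b x : jacobiP 0 a b x = 1.
Proof. unfold jacobiP. simpl. rewrite !gbinom_0. ring. Qed.

Lemma eq_of_is_derive (f g df : R -> R) :
  (forall x, is_derive f x (df x)) -> (forall x, is_derive g x (df x)) -> f 0 = g 0 ->
  forall x, f x = g x.
Proof.
  intros Hf Hg H0 x.
  assert (Hd : forall y, is_derive (fun z => f z - g z) y 0).
  { intros y. replace 0 with (df y - df y) by ring. apply (is_derive_minus f g); auto. }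
  destruct (MVT_gen (fun z => f z - g z) 0 x (fun _ => 0)) as [c [_ Hc]].
  - intros; apply Hd.
  - intros y _. apply (proj2 (continuity_pt_filterlim _ _)), (continuous_of_ex_derive (fun z => f z - g z)).
    eexists; apply Hd.
  - lra.
Qed.

Lemma is_derive_poly (c : nat -> R) n x :
  is_derive (fun y => sum_f_R0 (fun i => c i * y ^ i) n) x
    (sum_f_R0 (fun i => c i * (INR i * x ^ pred i)) n).
Proof. apply (is_derive_sum (fun i y => c i * y ^ i)). intros m. auto_derive; auto. ring. Qed.

Lemma jacobiP_monomial k : forall a b x,
  jacobiP k a b x = sum_f_R0 (fun i => jacobi_mcoef k a b i * x ^ i) k.
Proof.
  induction k as [|k IH]; intros a b.
  - intros x. rewrite jacobiP_0. simpl. ring.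
  - apply (eq_of_is_derive _ _ (fun y => (INR k + a + b + 2) / 2 * jacobiP k (a + 1) (b + 1) y)).
    + intros x. rewrite <- jacobiD_S. apply is_derive_jacobiP.
    + intros y. eapply is_derive_ext; [intros; reflexivity|].
      replace ((INR k + a + b + 2) / 2 * jacobiP k (a + 1) (b + 1) y) with
        (sum_f_R0 (fun i => jacobi_mcoef (S k) a b i * (INR i * y ^ pred i)) (S k)).
      { apply is_derive_poly. }
      rewrite decomp_sum by lia. simpl INR at 1. rewrite Rmult_0_l, Rmult_0_r, Rplus_0_l.
      rewrite IH, <- sum_scal_l. apply sum_eq. intros i Hi.
      change (jacobi_mcoef (S k) a b (S i))
        with ((INR k + a + b + 2) / 2 / INR (S i) * jacobi_mcoef k (a + 1) (b + 1) i).
      assert (INR (S i) <> 0) by (apply not_0_INR; lia).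
      change (pred (S i)) with i. field; auto.
    + rewrite decomp_sum by lia. simpl jacobi_mcoef at 1.
      rewrite sum_eq_R0 by (intros; simpl; ring). simpl. ring.
Qed.

Lemma jacobi_mcoef_lead_S k a b :
  jacobi_mcoef (S k) a b (S k) = (INR k + a + b + 2) / 2 / INR (S k) * jacobi_mcoef k (a + 1) (b + 1) k.
Proof. reflexivity. Qed.

Lemma jacobi_mcoef_sub1 k : forall a b, 0 < a -> 0 < b ->
  jacobi_mcoef (S k) a b k
  = jacobi_mcoef (S k) a b (S k) * (INR (S k) * (a - b) / (2 * INR (S k) + a + b)).
Proof.
  induction k as [|k IH]; intros a b Ha Hb.
  - simpl. unfold jacobiP. simpl. rewrite !gbinom_0, !gbinom_1. field. lra.
  - change (jacobi_mcoef (S (S k)) a b (S k))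
      with ((INR (S k) + a + b + 2) / 2 / INR (S k) * jacobi_mcoef (S k) (a + 1) (b + 1) k).
    rewrite jacobi_mcoef_lead_S, IH by lra.
    assert (INR (S k) > 0) by (apply lt_0_INR; lia).
    rewrite !S_INR in *. field. repeat split; lra.
Qed.

Definition jacobi_mcoef_sub2 (k : nat) (a b : R) : R :=
  match k with S (S m) => jacobi_mcoef k a b m | _ => 0 end.

Lemma jacobi_mcoef_sub2_SS k : forall a b, 0 < a -> 0 < b ->
  jacobi_mcoef (S (S k)) a b k = jacobi_mcoef (S (S k)) a b (S (S k)) *
    (let K := INR (S (S k)) in let r := 2 * K + a + b in
     - (K * (K - 1) * (r - (a - b) ^ 2)) / (2 * r * (r - 1))).
Proof.
  induction k as [|k IH]; intros a b Ha Hb.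
  - simpl. unfold jacobiP. simpl. rewrite !gbinom_0, !gbinom_1, !gbinom_2. field. lra.
  - change (jacobi_mcoef (S (S (S k))) a b (S k))
      with ((INR (S (S k)) + a + b + 2) / 2 / INR (S k) * jacobi_mcoef (S (S k)) (a + 1) (b + 1) k).
    rewrite jacobi_mcoef_lead_S, IH by lra. cbv zeta.
    assert (INR k >= 0) by (apply Rle_ge, pos_INR).
    rewrite !S_INR in *. field. repeat split; lra.
Qed.

Lemma jacobi_mcoef_sub2_eq k a b : 0 < a -> 0 < b -> (1 <= k)%nat ->
  jacobi_mcoef_sub2 k a b = jacobi_mcoef k a b k *
    (let K := INR k in let r := 2 * K + a + b in
     - (K * (K - 1) * (r - (a - b) ^ 2)) / (2 * r * (r - 1))).
Proof.
  intros Ha Hb Hk. destruct k as [|[|k]]; [lia| |].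
  - cbv zeta. simpl INR. simpl. field. lra.
  - apply jacobi_mcoef_sub2_SS; auto.
Qed.

(** * Integrals against the Jacobi weight *)

Definition jweight (a b x : R) : R := rpow (1 - x) a * rpow (1 + x) b.

Definition jint (a b : R) (f : R -> R) : R := RInt (fun x => jweight a b x * f x) (-1) 1.

Section JacobiIntegral.

Variables (a b : R).
Hypotheses (Ha : 0 < a) (Hb : 0 < b).

Lemma continuous_all_jweight : continuous_all (jweight a b).
Proof.
  apply continuous_all_mult; [apply continuous_all_rpow_1m|apply continuous_all_rpow_1p]; auto.
Qed.

Lemma ex_RInt_jint f : continuous_all f -> ex_RInt (fun x => jweight a b x * f x) (-1) 1.
Proof. intros Hf. apply ex_RInt_continuous_all, continuous_all_mult; auto. apply continuous_all_jweight. Qed.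

Lemma jint_plus f g : continuous_all f -> continuous_all g ->
  jint a b (fun x => f x + g x) = jint a b f + jint a b g.
Proof.
  intros. unfold jint. rewrite <- RInt_plus_R by (apply ex_RInt_jint; auto).
  apply RInt_ext. intros; simpl; ring.
Qed.

Lemma jint_scal c f : continuous_all f -> jint a b (fun x => c * f x) = c * jint a b f.
Proof.
  intros. unfold jint. rewrite <- RInt_scal_R by (apply ex_RInt_jint; auto).
  apply RInt_ext. intros; simpl; ring.
Qed.

Lemma jint_sum (f : nat -> R -> R) n : (forall m, continuous_all (f m)) ->
  jint a b (fun x => sum_f_R0 (fun m => f m x) n) = sum_f_R0 (fun m => jint a b (f m)) n.
Proof.
  intros H. induction n; simpl; [reflexivity|].
  rewrite jint_plus, IHn; auto. apply continuous_all_sum; auto.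
Qed.

End JacobiIntegral.

Lemma jint_ext a b f g : (forall x, -1 < x < 1 -> f x = g x) -> jint a b f = jint a b g.
Proof. intros H. apply RInt_ext_R; [lra|]. intros x Hx. rewrite H; auto. Qed.

Lemma jint_shift a b f : jint a b (fun x => (1 - x ^ 2) * f x) = jint (a + 1) (b + 1) f.
Proof.
  apply RInt_ext_R; [lra|]. intros x Hx. unfold jweight.
  rewrite !rpow_plus1 by lra. simpl. ring.
Qed.

(* Integration by parts against the weight: the boundary terms of
   [(1-x)^(a+1) (1+x)^(b+1) p] vanish. *)
Lemma jint_pearson a b p dp : 0 < a -> 0 < b ->
  (forall x, is_derive p x (dp x)) -> continuous_all dp ->
  jint a b (fun x => jtau a b x * p x + (1 - x ^ 2) * dp x) = 0.
Proof.
  intros Ha Hb Hp Hdp.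
  assert (Cp : continuous_all p) by (intros x; apply continuous_of_ex_derive; eexists; apply Hp).
  set (g := fun x => ((a + 1) * rpow (1 - x) a * -1 * rpow (1 + x) (b + 1)
      + rpow (1 - x) (a + 1) * ((b + 1) * rpow (1 + x) b * 1)) * p x
      + jweight (a + 1) (b + 1) x * dp x).
  rewrite <- (RInt_derive_vanishing (fun x => jweight (a + 1) (b + 1) x * p x) g (-1) 1).
  - apply RInt_ext_R; [lra|]. intros x Hx. unfold g, jweight, jtau.
    rewrite !rpow_plus1 by lra. simpl. ring.
  - intros x. apply is_derive_Rmult; auto. unfold jweight.
    apply (is_derive_Rmult (fun y => rpow (1 - y) (a + 1)) (fun y => rpow (1 + y) (b + 1)));
      apply is_derive_rpow_comp; auto; auto_derive; auto; ring.
  - unfold g, jweight. solve_continuity;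
      (apply continuous_all_rpow_1m || apply continuous_all_rpow_1p); lra.
  - unfold jweight. rewrite (rpow_nonpos (1 + -1)) by lra. ring.
  - unfold jweight. rewrite (rpow_nonpos (1 - 1)) by lra. ring.
Qed.

(* [jint_pearson] for [jacobiP k (a+1) (b+1) * q], simplified by [jacobi_rodrigues_step]. *)
Lemma jint_jacobiP_S_mul k a b q dq : 0 < a -> 0 < b ->
  (forall x, is_derive q x (dq x)) -> continuous_all dq ->
  jint a b (fun x => jacobiP (S k) a b x * q x)
  = / (2 * INR (S k)) * jint (a + 1) (b + 1) (fun x => jacobiP k (a + 1) (b + 1) x * dq x).
Proof.
  intros Ha Hb Hq Hdq.
  assert (Cq : continuous_all q) by (intros x; apply continuous_of_ex_derive; eexists; apply Hq).
  assert (CP := continuous_all_jacobiP (S k) a b).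
  assert (CQ := continuous_all_jacobiP k (a + 1) (b + 1)).
  assert (CD := continuous_all_jacobiD k (a + 1) (b + 1)).
  assert (HP := jint_pearson a b (fun x => jacobiP k (a + 1) (b + 1) x * q x)
    (fun x => jacobiD k (a + 1) (b + 1) x * q x + jacobiP k (a + 1) (b + 1) x * dq x) Ha Hb).
  rewrite (jint_ext _ _ _ (fun x => (-2 * INR (S k)) * (jacobiP (S k) a b x * q x)
      + (1 - x ^ 2) * (jacobiP k (a + 1) (b + 1) x * dq x))) in HP.
  2:{ intros x _. transitivity ((-2 * INR (S k) * jacobiP (S k) a b x) * q x
        + (1 - x ^ 2) * (jacobiP k (a + 1) (b + 1) x * dq x)); [|ring].
      rewrite <- (jacobi_rodrigues_step k a b x). ring. }
  rewrite jint_plus, jint_scal, jint_shift in HP by (auto; solve_continuity).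
  assert (INR (S k) > 0) by (apply lt_0_INR; lia).
  assert (HP' : -2 * INR (S k) * jint a b (fun x => jacobiP (S k) a b x * q x)
      + jint (a + 1) (b + 1) (fun x => jacobiP k (a + 1) (b + 1) x * dq x) = 0).
  { apply HP; [intros x; apply is_derive_Rmult; auto; apply is_derive_jacobiP|solve_continuity]. }
  field_simplify_eq; [|lra]. lra.
Qed.

Definition moment_coef (k i : nat) : R :=
  INR (Factorial.fact i) / (INR (Factorial.fact (i - k)) * 2 ^ k * INR (Factorial.fact k)).

Lemma jint_jacobiP_pow k : forall a b i, 0 < a -> 0 < b ->
  jint a b (fun x => jacobiP k a b x * x ^ i)
  = if (i <? k)%nat then 0 else moment_coef k i * jint (a + INR k) (b + INR k) (fun x => x ^ (i - k)).
Proof.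
  induction k as [|k IH]; intros a b i Ha Hb.
  - simpl (i <? 0)%nat. simpl INR. rewrite !Rplus_0_r, Nat.sub_0_r.
    replace (moment_coef 0 i) with 1
      by (unfold moment_coef; rewrite Nat.sub_0_r; simpl; field; apply INR_fact_neq_0).
    rewrite Rmult_1_l. apply jint_ext. intros. rewrite jacobiP_0. ring.
  - rewrite (jint_jacobiP_S_mul k a b (fun x => x ^ i) (fun x => INR i * x ^ pred i)); auto;
      [|intros x; auto_derive; auto; ring|solve_continuity].
    rewrite (jint_ext _ _ _ (fun x => INR i * (jacobiP k (a + 1) (b + 1) x * x ^ pred i))) by (intros; ring).
    rewrite jint_scal, IH by (try lra; assert (C := continuous_all_jacobiP k (a + 1) (b + 1)); solve_continuity).
    destruct i as [|j]; [simpl; ring|].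
    simpl pred. replace (S j <? S k)%nat with (j <? k)%nat by reflexivity.
    destruct (j <? k)%nat; [ring|].
    replace (a + 1 + INR k) with (a + INR (S k)) by (rewrite S_INR; ring).
    replace (b + 1 + INR k) with (b + INR (S k)) by (rewrite S_INR; ring).
    unfold moment_coef. change (S j - S k)%nat with (j - k)%nat.
    rewrite !fact_simpl, !mult_INR. simpl pow.
    assert (INR (Factorial.fact (j - k)) <> 0) by apply INR_fact_neq_0.
    assert (INR (Factorial.fact k) <> 0) by apply INR_fact_neq_0.
    assert (INR (S k) <> 0) by (apply not_0_INR; lia).
    assert (2 ^ k <> 0) by (apply pow_nonzero; lra).
    field. repeat split; auto.
Qed.

Definition jmass (a b : R) : R := jint a b (fun _ => 1).

Lemma jint_id a b : 0 < a -> 0 < b -> jint a b (fun x => x) = (b - a) / (a + b + 2) * jmass a b.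
Proof.
  intros Ha Hb.
  assert (H := jint_pearson a b (fun _ => 1) (fun _ => 0) Ha Hb).
  rewrite (jint_ext _ _ _ (fun x => (b - a) * 1 + (-(a + b + 2)) * x)) in H
    by (intros; unfold jtau; ring).
  rewrite jint_plus, !jint_scal in H by (auto; solve_continuity).
  unfold jmass. field_simplify_eq; [|lra].
  apply Rminus_diag_uniq_sym. rewrite <- H; [ring| |solve_continuity].
  intros; apply (is_derive_const (V:=R_NormedModule)).
Qed.

Lemma jint_sqr a b : 0 < a -> 0 < b ->
  jint a b (fun x => x ^ 2) = ((b - a) * jint a b (fun x => x) + jmass a b) / (a + b + 3).
Proof.
  intros Ha Hb.
  assert (H := jint_pearson a b (fun x => x) (fun _ => 1) Ha Hb).
  rewrite (jint_ext _ _ _ (fun x => ((b - a) * x + 1 * 1) + (-(a + b + 3)) * x ^ 2)) in H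
    by (intros; unfold jtau; simpl; ring).
  rewrite !jint_plus, !jint_scal in H by (auto; solve_continuity).
  unfold jmass. field_simplify_eq; [|lra].
  apply Rminus_diag_uniq_sym. rewrite <- H; [ring| |solve_continuity].
  intros; apply (is_derive_id (K:=R_AbsRing)).
Qed.

Lemma moment_coef_add k' j : moment_coef k' (k' + j)
  = INR (Factorial.fact (k' + j)) / (INR (Factorial.fact k') * INR (Factorial.fact j)) / 2 ^ k'.
Proof.
  unfold moment_coef. replace (k' + j - k')%nat with j by lia.
  assert (INR (Factorial.fact k') <> 0) by apply INR_fact_neq_0.
  assert (INR (Factorial.fact j) <> 0) by apply INR_fact_neq_0.
  assert (2 ^ k' <> 0) by (apply pow_nonzero; lra).
  field. auto.
Qed.

Definition jmoment (k : nat) (a b : R) (j : nat) : R := jint a b (fun x => jacobiP k a b x * x ^ j).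

Section Moments.

Variables (k : nat) (a b : R).
Hypotheses (Ha : 0 < a) (Hb : 0 < b).

Let r := a + b + 2 * INR k.
Let N := jmass (a + INR k) (b + INR k) / 2 ^ k.

Let fact_k_neq0 : INR (Factorial.fact k) <> 0 := INR_fact_neq_0 k.
Let pow2_k_neq0 : 2 ^ k <> 0 := pow_nonzero 2 k ltac:(lra).
Let INR_k_ge0 : 0 <= INR k := pos_INR k.

Lemma jmoment_lt j : (j < k)%nat -> jmoment k a b j = 0.
Proof.
  intros Hj. unfold jmoment. rewrite jint_jacobiP_pow by auto.
  replace (j <? k)%nat with true by (symmetry; apply Nat.ltb_lt; auto). reflexivity.
Qed.

Lemma jmoment_from_pow j : jmoment k a b (k + j)
  = moment_coef k (k + j) * jint (a + INR k) (b + INR k) (fun x => x ^ j).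
Proof.
  unfold jmoment. rewrite jint_jacobiP_pow by auto.
  replace (k + j <? k)%nat with false by (symmetry; apply Nat.ltb_ge; lia).
  replace (k + j - k)%nat with j by lia. reflexivity.
Qed.

Lemma jmoment_0 : jmoment k a b k = N.
Proof.
  rewrite <- (Nat.add_0_r k) at 2. rewrite jmoment_from_pow, moment_coef_add, Nat.add_0_r.
  unfold N, jmass. simpl. field. auto.
Qed.

Lemma jmoment_1 : jmoment k a b (S k) = (INR k + 1) * ((b - a) / (r + 2)) * N.
Proof.
  rewrite <- Nat.add_1_r, jmoment_from_pow, moment_coef_add, Nat.add_1_r, fact_simpl, mult_INR, S_INR.
  rewrite (jint_ext _ _ _ (fun x => x)) by (intros; simpl; ring).
  rewrite jint_id by lra. unfold N, r.
  replace (b + INR k - (a + INR k)) with (b - a) by ring.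
  replace (a + INR k + (b + INR k) + 2) with (a + b + 2 * INR k + 2) by ring.
  simpl. field. repeat split; auto; lra.
Qed.

Lemma jmoment_2 : jmoment k a b (S (S k))
  = (INR k + 1) * (INR k + 2) / 2 * (((b - a) * ((b - a) / (r + 2)) + 1) / (r + 3)) * N.
Proof.
  replace (S (S k)) with (k + 2)%nat by lia.
  rewrite jmoment_from_pow, moment_coef_add.
  replace (k + 2)%nat with (S (S k)) by lia. rewrite !fact_simpl, !mult_INR, !S_INR.
  rewrite jint_sqr, jint_id by lra. unfold N, r.
  replace (b + INR k - (a + INR k)) with (b - a) by ring.
  replace (a + INR k + (b + INR k) + 2) with (a + b + 2 * INR k + 2) by ring.
  replace (a + INR k + (b + INR k) + 3) with (a + b + 2 * INR k + 3) by ring.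
  simpl. field. repeat split; auto; lra.
Qed.

End Moments.

(** * Reduction of the integral of W to moments *)

Definition W_q0 (k : nat) (a b : R) : R :=
  rho_ k a b ^ 2 - sigma_ a b ^ 2 + 4 * jacobi_eigen k a b - 2 * eta_ a b ^ 2 - 2 * (2 - sigma_ a b).
Definition W_q1 (a b : R) : R := - 4 * sigma_ a b * eta_ a b.
Definition W_q2 (k : nat) (a b : R) : R :=
  2 * (4 - sigma_ a b ^ 2) + 2 * (2 - sigma_ a b)
  - (rho_ k a b ^ 2 - sigma_ a b ^ 2 + 4 * jacobi_eigen k a b).

Definition W_quadratic (k : nat) (a b x : R) : R := W_q0 k a b + W_q1 a b * x + W_q2 k a b * x ^ 2.

(* Along a solution of the Jacobi equation, (1 - x^2) W equals y^2 times a quadratic, up to the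
   two Pearson forms of [(1 - x^2) y y'] and [l y^2]; [l] is chosen to cancel the [y y'] terms. *)
Lemma W_decomposition k a b x y y1 y2 :
  (1 - x ^ 2) * y2 + jtau a b x * y1 + jacobi_eigen k a b * y = 0 ->
  let l := (b - a) + (2 - (a + b)) * x in
  (1 - x ^ 2) * ((rho_ k a b ^ 2 - sigma_ a b ^ 2) * y ^ 2
     - 4 * (eta_ a b + sigma_ a b * x) * y * y1 + 4 * (1 - x ^ 2) * y1 ^ 2)
  = 4 * (jtau a b x * ((1 - x ^ 2) * (y * y1))
         + (1 - x ^ 2) * (-2 * x * (y * y1) + (1 - x ^ 2) * (y1 * y1 + y * y2)))
    + (2 * (jtau a b x * (l * (y * y)) + (1 - x ^ 2) * ((2 - (a + b)) * (y * y) + l * (y1 * y + y * y1)))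
    + y ^ 2 * W_quadratic k a b x).
Proof.
  intros Hode l. apply Rminus_diag_uniq.
  transitivity (-4 * (1 - x ^ 2) * y * ((1 - x ^ 2) * y2 + jtau a b x * y1 + jacobi_eigen k a b * y)).
  - unfold l, W_quadratic, W_q0, W_q1, W_q2, jtau, jacobi_eigen, rho_, eta_, sigma_. ring.
  - rewrite Hode. ring.
Qed.

Lemma jint_W_reduce k a b : 0 < a -> 0 < b ->
  jint a b (fun x => (1 - x ^ 2) * W k a b x)
  = jint a b (fun x => jacobiP k a b x ^ 2 * W_quadratic k a b x).
Proof.
  intros Ha Hb.
  rewrite (jint_ext _ _ _ (fun x => (1 - x ^ 2) * ((rho_ k a b ^ 2 - sigma_ a b ^ 2) * jacobiP k a b x ^ 2
     - 4 * (eta_ a b + sigma_ a b * x) * jacobiP k a b x * jacobiD k a b x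
     + 4 * (1 - x ^ 2) * jacobiD k a b x ^ 2)))
    by (intros; unfold W; rewrite Derive_jacobiP; reflexivity).
  set (y := jacobiP k a b). set (y1 := jacobiD k a b). set (y2 := jacobiD2 k a b).
  set (l := fun x => (b - a) + (2 - (a + b)) * x).
  assert (Cy : continuous_all y) by apply continuous_all_jacobiP.
  assert (Cy1 : continuous_all y1) by apply continuous_all_jacobiD.
  assert (Cy2 : continuous_all y2) by apply continuous_all_jacobiD2.
  assert (Dy : forall x, is_derive y x (y1 x)) by apply is_derive_jacobiP.
  assert (Dy1 : forall x, is_derive y1 x (y2 x)) by apply is_derive_jacobiD.
  set (p1 := fun x => (1 - x ^ 2) * (y x * y1 x)).
  set (dp1 := fun x => -2 * x * (y x * y1 x) + (1 - x ^ 2) * (y1 x * y1 x + y x * y2 x)).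
  set (p2 := fun x => l x * (y x * y x)).
  set (dp2 := fun x => (2 - (a + b)) * (y x * y x) + l x * (y1 x * y x + y x * y1 x)).
  assert (H1 := jint_pearson a b p1 dp1 Ha Hb).
  assert (H2 := jint_pearson a b p2 dp2 Ha Hb).
  set (I1 := fun x => jtau a b x * p1 x + (1 - x ^ 2) * dp1 x) in H1.
  set (I2 := fun x => jtau a b x * p2 x + (1 - x ^ 2) * dp2 x) in H2.
  rewrite (jint_ext _ _ _ (fun x => 4 * I1 x + (2 * I2 x + y x ^ 2 * W_quadratic k a b x)))
    by (intros x _; apply W_decomposition, jacobi_ode).
  assert (CI1 : continuous_all I1) by (unfold I1, p1, dp1, jtau; solve_continuity).
  assert (CI2 : continuous_all I2) by (unfold I2, p2, dp2, l, jtau; solve_continuity).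
  rewrite jint_plus, jint_scal, jint_plus, jint_scal by (auto; unfold W_quadratic; solve_continuity).
  rewrite H1, H2; [ring| | | |].
  - intros x. apply (is_derive_Rmult l (fun t => y t * y t)); [unfold l; auto_derive; auto; ring|].
    apply is_derive_Rmult; auto.
  - unfold dp2, l. solve_continuity.
  - intros x. apply (is_derive_Rmult (fun t => 1 - t ^ 2) (fun t => y t * y1 t)); [auto_derive; auto; ring|].
    apply is_derive_Rmult; auto.
  - unfold dp1. solve_continuity.
Qed.

Lemma jint_jacobiP_sq_quadratic k a b q0 q1 q2 : 0 < a -> 0 < b ->
  jint a b (fun x => jacobiP k a b x ^ 2 * (q0 + q1 * x + q2 * x ^ 2))
  = sum_f_R0 (fun i => jacobi_mcoef k a b i *
      (q0 * jmoment k a b i + q1 * jmoment k a b (S i) + q2 * jmoment k a b (S (S i)))) k.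
Proof.
  intros Ha Hb.
  set (y := jacobiP k a b). assert (Cy : continuous_all y) by apply continuous_all_jacobiP.
  rewrite (jint_ext _ _ _ (fun x => sum_f_R0 (fun i => jacobi_mcoef k a b i *
     (q0 * (y x * x ^ i) + q1 * (y x * x ^ (S i)) + q2 * (y x * x ^ (S (S i))))) k)).
  2:{ intros x _. transitivity (y x * (q0 + q1 * x + q2 * x ^ 2) * y x); [unfold y; ring|].
      assert (E := jacobiP_monomial k a b x). change (jacobiP k a b x) with (y x) in E.
      rewrite E at 2. rewrite scal_sum. apply sum_eq. intros. simpl pow. ring. }
  rewrite jint_sum by (auto; intros m; solve_continuity).
  apply sum_eq. intros i _. unfold jmoment. fold y.
  rewrite jint_scal, !jint_plus, !jint_scal by (auto; solve_continuity).
  reflexivity.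
Qed.

Lemma sum_f_R0_last (G : nat -> R) m : (forall i, (i < m)%nat -> G i = 0) -> sum_f_R0 G m = G m.
Proof.
  intros H. destruct m as [|m]; [reflexivity|].
  rewrite tech5, sum_eq_R0; [ring|]. intros; apply H; lia.
Qed.

(* Orthogonality of [jacobiP k] to lower degrees leaves only the three leading coefficients. *)
Lemma jint_jacobiP_sq_quadratic_top n a b q0 q1 q2 : 0 < a -> 0 < b ->
  let k := S n in
  jint a b (fun x => jacobiP k a b x ^ 2 * (q0 + q1 * x + q2 * x ^ 2))
  = jacobi_mcoef k a b k * (q0 * jmoment k a b k + q1 * jmoment k a b (S k) + q2 * jmoment k a b (S (S k)))
    + jacobi_mcoef k a b n * (q1 * jmoment k a b k + q2 * jmoment k a b (S k))
    + jacobi_mcoef_sub2 k a b * (q2 * jmoment k a b k).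
Proof.
  intros Ha Hb k. unfold k. rewrite jint_jacobiP_sq_quadratic by auto.
  destruct n as [|m].
  - cbn [sum_f_R0 jacobi_mcoef_sub2]. rewrite (jmoment_lt 1 a b Ha Hb 0) by lia. ring.
  - rewrite !tech5, sum_f_R0_last.
    2:{ intros i Hi. rewrite !jmoment_lt by (auto; lia). ring. }
    change (jacobi_mcoef_sub2 (S (S m)) a b) with (jacobi_mcoef (S (S m)) a b m).
    rewrite (jmoment_lt _ a b Ha Hb m), (jmoment_lt _ a b Ha Hb (S m)) by lia.
    ring.
Qed.

Lemma jint_W k a b : 0 < a -> 0 < b -> (1 <= k)%nat ->
  jint (a + 1) (b + 1) (W k a b)
  = (rho_ k a b ^ 2 - eta_ a b ^ 2) * (rho_ k a b ^ 2 - sigma_ a b ^ 2)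
    / (rho_ k a b * (rho_ k a b - 1)) * (jacobi_mcoef k a b k * jmass (a + INR k) (b + INR k) / 2 ^ k).
Proof.
  intros Ha Hb Hk.
  rewrite <- jint_shift, jint_W_reduce by auto. unfold W_quadratic.
  destruct k as [|n]; [lia|].
  rewrite jint_jacobiP_sq_quadratic_top by auto. cbv zeta.
  rewrite jmoment_0, jmoment_1, jmoment_2, jacobi_mcoef_sub1, jacobi_mcoef_sub2_eq by (auto; lia).
  unfold W_q0, W_q1, W_q2, jacobi_eigen, rho_, eta_, sigma_. cbv zeta.
  assert (HK : 1 <= INR (S n)) by (rewrite S_INR; generalize (pos_INR n); lra).
  assert (2 ^ S n <> 0) by (apply pow_nonzero; lra).
  set (K := INR (S n)) in *. field. repeat split; auto; lra.
Qed.

(** * The Beta integral *)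

(* [beta_int p q] is Euler's B(p+1, q+1). *)
Definition beta_int (p q : R) : R := RInt (fun t => rpow t p * rpow (1 - t) q) 0 1.

Lemma continuous_all_beta_integrand p q : 0 < p -> 0 < q ->
  continuous_all (fun t => rpow t p * rpow (1 - t) q).
Proof.
  intros Hp Hq. apply continuous_all_mult; [intros t; apply continuous_rpow|apply continuous_all_rpow_1m]; auto.
Qed.

Lemma ex_RInt_beta p q a b : 0 < p -> 0 < q -> ex_RInt (fun t => rpow t p * rpow (1 - t) q) a b.
Proof. intros. apply ex_RInt_continuous_all, continuous_all_beta_integrand; auto. Qed.

Section BetaIntegral.

Variables (p q : R).
Hypotheses (Hp : 0 < p) (Hq : 0 < q).

Lemma beta_int_pos : 0 < beta_int p q.
Proof.
  apply RInt_gt_0; [lra| |intros; apply continuous_all_beta_integrand; auto].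
  intros x Hx. apply Rmult_lt_0_compat; apply rpow_gt0; lra.
Qed.

Lemma beta_int_split : beta_int p q = beta_int (p + 1) q + beta_int p (q + 1).
Proof.
  unfold beta_int. rewrite <- RInt_plus_R by (apply ex_RInt_beta; lra).
  apply RInt_ext_R; [lra|]. intros x Hx. rewrite !rpow_plus1 by lra. ring.
Qed.

Lemma beta_int_parts : (p + 1) * beta_int p (q + 1) = (q + 1) * beta_int (p + 1) q.
Proof.
  set (g := fun t => (p + 1) * rpow t p * 1 * rpow (1 - t) (q + 1)
                     + rpow t (p + 1) * ((q + 1) * rpow (1 - t) q * -1)).
  assert (HI : RInt g 0 1 = 0).
  { apply (RInt_derive_vanishing (fun t => rpow t (p + 1) * rpow (1 - t) (q + 1))).
    - intros t. apply (is_derive_Rmult (fun t => rpow t (p + 1)) (fun t => rpow (1 - t) (q + 1))).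
      + apply (is_derive_rpow_comp (fun t => t)); auto. apply (is_derive_id (K:=R_AbsRing)).
      + apply is_derive_rpow_comp; auto. auto_derive; auto; ring.
    - assert (C1 := continuous_all_rpow_1m q Hq). assert (C2 := continuous_all_rpow_1m (q + 1) ltac:(lra)).
      assert (C3 : continuous_all (fun t => rpow t p)) by (intros t; apply continuous_rpow; auto).
      assert (C4 : continuous_all (fun t => rpow t (p + 1))) by (intros t; apply continuous_rpow; lra).
      unfold g. solve_continuity.
    - rewrite (rpow_nonpos 0) by lra. ring.
    - rewrite (rpow_nonpos (1 - 1)) by lra. ring. }
  rewrite (RInt_ext g (fun t => (p + 1) * (rpow t p * rpow (1 - t) (q + 1))
     - (q + 1) * (rpow t (p + 1) * rpow (1 - t) q))) in HI by (intros; unfold g; simpl; ring).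
  assert (C1 := continuous_all_beta_integrand p (q + 1) Hp ltac:(lra)).
  assert (C2 := continuous_all_beta_integrand (p + 1) q ltac:(lra) Hq).
  rewrite RInt_minus_R, !RInt_scal_R in HI by (apply ex_RInt_continuous_all; first [assumption|
    apply (continuous_all_mult (fun _ => _)); [apply continuous_all_const|assumption]]).
  unfold beta_int. lra.
Qed.

Lemma beta_int_succ_r : beta_int p (q + 1) = (q + 1) / (p + q + 2) * beta_int p q.
Proof.
  rewrite beta_int_split. assert (H := beta_int_parts).
  apply (Rmult_eq_reg_l (p + q + 2)); [|lra]. field_simplify; [|lra]. lra.
Qed.

Lemma beta_int_succ_l : beta_int (p + 1) q = (p + 1) / (p + q + 2) * beta_int p q.
Proof.
  rewrite beta_int_split. assert (H := beta_int_parts).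
  apply (Rmult_eq_reg_l (p + q + 2)); [|lra]. field_simplify; [|lra]. lra.
Qed.

Lemma beta_int_antimono q' : q <= q' -> beta_int p q' <= beta_int p q.
Proof.
  intros Hq'. apply RInt_le; try lra; try (apply ex_RInt_beta; lra).
  intros x Hx. apply Rmult_le_compat_l; [apply rpow_ge0|]. apply rpow_le_exponent; lra.
Qed.

End BetaIntegral.

Lemma RInt_rpow_01 s : 0 < s -> RInt (fun t => rpow t s) 0 1 = / (s + 1).
Proof.
  intros Hs. apply (is_RInt_unique (V:=R_CompleteNormedModule)).
  replace (/ (s + 1)) with (minus (/ (s + 1) * rpow 1 (s + 1)) (/ (s + 1) * rpow 0 (s + 1)))
    by (rewrite rpow_1_l, (rpow_nonpos 0) by lra; unfold minus, plus, opp; simpl; field; lra).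
  apply (is_RInt_derive (fun t => / (s + 1) * rpow t (s + 1))).
  - intros x _. replace (rpow x s) with (/ (s + 1) * ((s + 1) * rpow x (s + 1 - 1)))
      by (replace (s + 1 - 1) with s by ring; field; lra).
    apply (is_derive_scal (fun t => rpow t (s + 1))), is_derive_rpow; lra.
  - intros; apply continuous_rpow; auto.
Qed.

Lemma beta_int_1 s : 0 < s -> beta_int s 1 = / ((s + 1) * (s + 2)).
Proof.
  intros Hs. unfold beta_int.
  rewrite (RInt_ext_R _ (fun t => rpow t s - rpow t (s + 1)))
    by (lra || (intros x Hx; rewrite rpow_1, rpow_plus1 by lra; ring)).
  rewrite RInt_minus_R, !RInt_rpow_01 by (lra || (apply ex_RInt_continuous_all; intros t; apply continuous_rpow; lra)).
  field. lra.
Qed.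

Lemma jmass_beta_int a b : 0 < a -> 0 < b -> jmass a b = Rpower 2 (a + b + 1) * beta_int b a.
Proof.
  intros Ha Hb. unfold jmass, jint, beta_int.
  assert (Hex : ex_RInt (fun x => jweight a b x * 1) (2 * 0 + -1) (2 * 1 + -1)).
  { replace (2 * 0 + -1) with (-1) by ring. replace (2 * 1 + -1) with 1 by ring.
    apply ex_RInt_jint; auto. apply continuous_all_const. }
  assert (H := RInt_comp_lin (V:=R_CompleteNormedModule) (fun x => jweight a b x * 1) 2 (-1) 0 1 Hex).
  replace (2 * 0 + -1) with (-1) in H by ring. replace (2 * 1 + -1) with 1 in H by ring.
  rewrite <- H, <- RInt_scal_R by (apply ex_RInt_beta; lra).
  apply RInt_ext_R; [lra|]. intros x Hx. unfold scal; simpl; unfold mult; simpl. unfold jweight.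
  replace (1 - (2 * x + -1)) with (2 * (1 - x)) by ring.
  replace (1 + (2 * x + -1)) with (2 * x) by ring.
  rewrite !rpow_mult, !(rpow_Rpower 2), !Rpower_plus, Rpower_1 by lra. ring.
Qed.

(** * The Gamma integral as a limit of partial integrals *)

Definition gamma_integrand (s t : R) : R := rpow t (s - 1) * exp (- t).

Definition gamma_partial (s T : R) : R := RInt (gamma_integrand s) 0 T.

Lemma pow_le_exp_half N t : 0 <= t -> t ^ N <= INR (Factorial.fact N) * 2 ^ N * exp (t / 2).
Proof.
  intros Ht.
  assert (H := exp_ge_taylor (t / 2) N ltac:(lra)).
  assert (H2 : (t / 2) ^ N / INR (Factorial.fact N)
               <= sum_f_R0 (fun k => (t / 2) ^ k / INR (Factorial.fact k)) N).
  { destruct N; simpl; [lra|].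
    assert (0 <= sum_f_R0 (fun k => (t / 2) ^ k / INR (Factorial.fact k)) N); [|lra].
    apply cond_pos_sum. intros.
    apply Rmult_le_pos; [apply pow_le; lra|left; apply Rinv_0_lt_compat, INR_fact_lt_0]. }
  assert (HF : 0 < INR (Factorial.fact N)) by apply INR_fact_lt_0.
  assert (HP : 0 < 2 ^ N) by (apply pow_lt; lra).
  assert (E : (t / 2) ^ N = t ^ N / 2 ^ N) by (unfold Rdiv; rewrite Rpow_mult_distr, pow_inv; reflexivity).
  rewrite E in H2.
  assert (H3 : t ^ N / 2 ^ N / INR (Factorial.fact N) <= exp (t / 2)) by lra.
  apply (Rmult_le_compat_l (INR (Factorial.fact N) * 2 ^ N)) in H3; [|nra].
  replace (INR (Factorial.fact N) * 2 ^ N * (t ^ N / 2 ^ N / INR (Factorial.fact N))) with (t ^ N)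
    in H3 by (field; lra).
  exact H3.
Qed.

Lemma RInt_exp_half_le T : 0 <= T -> RInt (fun t => exp (- t / 2)) 0 T <= 2.
Proof.
  intros HT.
  assert (H : is_RInt (fun t => exp (- t / 2)) 0 T (minus (-2 * exp (- T / 2)) (-2 * exp (- 0 / 2)))).
  { apply (is_RInt_derive (fun t => -2 * exp (- t / 2))).
    - intros x _. auto_derive; auto. unfold Rdiv. field.
    - intros x _. apply continuous_of_ex_derive. auto_derive; auto. }
  apply (is_RInt_unique (V:=R_CompleteNormedModule)) in H. rewrite H.
  unfold minus, plus, opp; simpl.
  assert (0 < exp (- T / 2)) by apply exp_pos.
  replace (- 0 / 2) with 0 by field. rewrite exp_0. lra.
Qed.

Section GammaPartial.

Variable s : R.
Hypothesis Hs : 1 < s.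

Lemma continuous_all_gamma_integrand : continuous_all (gamma_integrand s).
Proof.
  intros x. apply continuous_Rmult; [apply continuous_rpow; lra|].
  apply continuous_of_ex_derive. auto_derive; auto.
Qed.

Lemma ex_RInt_gamma_integrand a b : ex_RInt (gamma_integrand s) a b.
Proof. apply ex_RInt_continuous_all, continuous_all_gamma_integrand. Qed.

Lemma gamma_integrand_ge0 t : 0 <= gamma_integrand s t.
Proof. apply Rmult_le_pos; [apply rpow_ge0|left; apply exp_pos]. Qed.

Lemma gamma_integrand_pos t : 0 < t -> 0 < gamma_integrand s t.
Proof. intros. apply Rmult_lt_0_compat; [apply rpow_gt0; auto|apply exp_pos]. Qed.

Lemma gamma_partial_chasles u v : gamma_partial s v = gamma_partial s u + RInt (gamma_integrand s) u v.
Proof. symmetry. apply (RInt_Chasles (V:=R_CompleteNormedModule)); apply ex_RInt_gamma_integrand. Qed.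

Lemma gamma_partial_ge0 T : 0 <= T -> 0 <= gamma_partial s T.
Proof.
  intros HT. apply RInt_ge_0; auto; [apply ex_RInt_gamma_integrand|intros; apply gamma_integrand_ge0].
Qed.

Lemma gamma_partial_le u v : u <= v -> gamma_partial s u <= gamma_partial s v.
Proof.
  intros Huv. rewrite (gamma_partial_chasles u v).
  assert (0 <= RInt (gamma_integrand s) u v); [|lra].
  apply RInt_ge_0; auto; [apply ex_RInt_gamma_integrand|intros; apply gamma_integrand_ge0].
Qed.

Lemma gamma_partial_le_id u : 0 <= u <= 1 -> gamma_partial s u <= u.
Proof.
  intros Hu.
  assert (H := RInt_le (gamma_integrand s) (fun _ => 1) 0 u ltac:(lra) (ex_RInt_gamma_integrand 0 u)).
  rewrite RInt_const in H. unfold scal in H; simpl in H; unfold mult in H; simpl in H.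
  replace u with ((u - 0) * 1) at 2 by ring. apply H; [apply ex_RInt_const|].
  intros t Ht. unfold gamma_integrand.
  assert (rpow t (s - 1) <= 1) by (apply rpow_le1; lra).
  assert (exp (- t) <= 1) by (rewrite <- exp_0; apply exp_le; lra).
  assert (0 <= rpow t (s - 1)) by apply rpow_ge0.
  assert (0 < exp (- t)) by apply exp_pos. nra.
Qed.

(* With N >= s - 1: t^(s-1) <= 1 + t^N <= C e^(t/2). *)
Lemma gamma_integrand_le_exp : exists C, 0 < C /\ forall t, 0 <= t -> gamma_integrand s t <= C * exp (- t / 2).
Proof.
  destruct (nfloor_ex s ltac:(lra)) as [N [HN1 HN2]].
  assert (HF : 0 < INR (Factorial.fact N)) by apply INR_fact_lt_0.
  assert (HP : 0 < 2 ^ N) by (apply pow_lt; lra).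
  exists (1 + INR (Factorial.fact N) * 2 ^ N). split; [nra|]. intros t Ht.
  assert (R1 : rpow t (s - 1) <= 1 + t ^ N).
  { assert (0 <= t ^ N) by (apply pow_le; lra).
    destruct (Rle_lt_dec t 1) as [Ht1|Ht1]; [assert (rpow t (s - 1) <= 1) by (apply rpow_le1; lra); lra|].
    rewrite rpow_Rpower, <- Rpower_pow by lra.
    assert (Rpower t (s - 1) <= Rpower t (INR N)) by (apply Rle_Rpower; lra). lra. }
  assert (R2 := pow_le_exp_half N t Ht).
  assert (E1 : exp (t / 2) * exp (- t) = exp (- t / 2)) by (rewrite <- exp_plus; f_equal; field).
  assert (E2 : exp (- t) <= exp (- t / 2)) by (apply exp_le; lra).
  assert (0 < exp (- t)) by apply exp_pos.
  assert (0 < exp (- t / 2)) by apply exp_pos.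
  unfold gamma_integrand.
  apply (Rle_trans _ ((1 + INR (Factorial.fact N) * 2 ^ N * exp (t / 2)) * exp (- t)));
    [apply Rmult_le_compat_r; lra|].
  rewrite Rmult_plus_distr_r, Rmult_assoc, E1. nra.
Qed.

Lemma gamma_partial_bounded : exists B, forall T, 0 <= T -> gamma_partial s T <= B.
Proof.
  destruct gamma_integrand_le_exp as [C [HC H]].
  assert (Ce : continuous_all (fun t => exp (- t / 2)))
    by (intros x; apply continuous_of_ex_derive; auto_derive; auto).
  exists (C * 2). intros T HT. unfold gamma_partial.
  apply (Rle_trans _ (RInt (fun t => C * exp (- t / 2)) 0 T)).
  - apply RInt_le; auto; [apply ex_RInt_gamma_integrand| |intros; apply H; lra].
    apply ex_RInt_continuous_all. solve_continuity.
  - rewrite RInt_scal_R by (apply ex_RInt_continuous_all; auto).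
    assert (H2 := RInt_exp_half_le T HT). nra.
Qed.

Lemma gamma_partial_sup : exists l, (forall T, 0 <= T -> gamma_partial s T <= l) /\
  (forall eps, 0 < eps -> exists T0, 0 <= T0 /\ l - eps < gamma_partial s T0).
Proof.
  destruct gamma_partial_bounded as [B HB].
  set (E := fun y => exists T, 0 <= T /\ y = gamma_partial s T).
  destruct (completeness E) as [l [Hub Hlub]].
  { exists B. intros y [T [HT ->]]. apply HB; auto. }
  { exists (gamma_partial s 0), 0. split; [lra|reflexivity]. }
  exists l. split; [intros T HT; apply Hub; exists T; auto|].
  intros eps Heps. apply NNPP. intros Hn.
  assert (l <= l - eps); [|lra].
  apply Hlub. intros y [T [HT ->]].
  destruct (Rle_lt_dec (gamma_partial s T) (l - eps)) as [h|h]; auto.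
  exfalso; apply Hn; exists T; auto.
Qed.

End GammaPartial.

Lemma is_RInt_gen_gamma s l : 1 < s ->
  (forall T, 0 <= T -> gamma_partial s T <= l) ->
  (forall eps, 0 < eps -> exists T0, 0 <= T0 /\ l - eps < gamma_partial s T0) ->
  is_RInt_gen (V:=R_NormedModule) (gamma_integrand s) (at_right 0) (Rbar_locally p_infty) l.
Proof.
  intros Hs Hup Happ. unfold is_RInt_gen.
  apply (filterlimi_lim_ext_loc (fun ab => RInt (gamma_integrand s) (fst ab) (snd ab))).
  { apply filter_forall. intros ab. apply (RInt_correct (V:=R_CompleteNormedModule)), ex_RInt_gamma_integrand; auto. }
  apply filterlim_locally. intros eps.
  destruct (Happ (eps / 2)) as [T0 [HT0 HT0']]; [destruct eps; simpl; lra|].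
  assert (Hd : 0 < Rmin 1 (eps / 2)) by (apply Rmin_pos; [lra|destruct eps; simpl; lra]).
  apply (Filter_prod _ _ _ (fun u => 0 < u < Rmin 1 (eps / 2)) (fun v => T0 < v)).
  - exists (mkposreal _ Hd). intros u Hu Hpos. simpl in Hu.
    unfold ball in Hu; simpl in Hu; unfold AbsRing_ball, abs, minus, plus, opp in Hu; simpl in Hu.
    rewrite Ropp_0, Rplus_0_r in Hu. split; auto. unfold Rabs in Hu; destruct (Rcase_abs u); lra.
  - exists T0. intros; auto.
  - intros u v [Hu1 Hu2] Hv. simpl.
    unfold ball; simpl; unfold AbsRing_ball, abs, minus, plus, opp; simpl.
    assert (Hc := gamma_partial_chasles s Hs u v).
    assert (Hm := Rmin_l 1 (eps / 2)). assert (Hm' := Rmin_r 1 (eps / 2)).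
    assert (h1 : gamma_partial s u <= u) by (apply gamma_partial_le_id; auto; lra).
    assert (h2 : 0 <= gamma_partial s u) by (apply gamma_partial_ge0; auto; lra).
    assert (h3 : gamma_partial s T0 <= gamma_partial s v) by (apply gamma_partial_le; auto; lra).
    assert (h4 : gamma_partial s v <= l) by (apply Hup; lra).
    unfold gamma_partial in *. unfold Rabs. destruct (Rcase_abs _); lra.
Qed.

Lemma Gamma_sup s : 1 < s ->
  (forall T, 0 <= T -> gamma_partial s T <= Gamma s) /\
  (forall eps, 0 < eps -> exists T0, 0 <= T0 /\ forall T, T0 <= T -> Gamma s - eps < gamma_partial s T).
Proof.
  intros Hs. destruct (gamma_partial_sup s Hs) as [l [Hup Happ]].
  replace (Gamma s) with l.
  2:{ assert (H := is_RInt_gen_gamma s l Hs Hup Happ).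
      unfold Gamma, gamma_integrand. symmetry. apply (is_RInt_gen_unique (V:=R_CompleteNormedModule)).
      exact H. }
  split; auto.
  intros eps Heps. destruct (Happ eps Heps) as [T0 [HT0 H0]]. exists T0. split; auto.
  intros T HT. assert (gamma_partial s T0 <= gamma_partial s T) by (apply gamma_partial_le; auto). lra.
Qed.

Lemma gamma_partial_lim s : 1 < s -> is_lim_seq (fun n => gamma_partial s (INR n)) (Gamma s).
Proof.
  intros Hs. destruct (Gamma_sup s Hs) as [H1 H2].
  apply is_lim_seq_spec. intros eps.
  destruct (H2 eps (cond_pos eps)) as [T0 [HT0 HT]].
  destruct (nfloor_ex T0 HT0) as [N [HN1 HN2]].
  exists (S N). intros n Hn.
  assert (INR (S N) <= INR n) by (apply le_INR; lia). rewrite S_INR in H.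
  assert (h1 := HT (INR n) ltac:(lra)). assert (h2 := H1 (INR n) (pos_INR n)).
  unfold Rabs. destruct (Rcase_abs _); lra.
Qed.

Lemma Gamma_pos s : 1 < s -> 0 < Gamma s.
Proof.
  intros Hs. destruct (Gamma_sup s Hs) as [H1 _].
  apply (Rlt_le_trans _ (gamma_partial s 1)); [|apply H1; lra].
  apply RInt_gt_0; [lra| |intros; apply continuous_all_gamma_integrand; auto].
  intros x Hx. apply gamma_integrand_pos; lra.
Qed.

(** * Euler's Beta-Gamma relation *)

Lemma exp_pow x n : exp x ^ n = exp (INR n * x).
Proof.
  induction n as [|n IH].
  - simpl. rewrite Rmult_0_l, exp_0. reflexivity.
  - rewrite <- tech_pow_Rmult, IH, <- exp_plus, S_INR. f_equal. ring.
Qed.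

Lemma pow_one_minus_ge_lin x c : 0 <= x <= 1 -> 1 - INR c * x <= (1 - x) ^ c.
Proof.
  intros Hx. induction c as [|c IH]; [simpl; lra|].
  rewrite <- tech_pow_Rmult, S_INR.
  assert (0 <= INR c) by apply pos_INR.
  apply (Rle_trans _ ((1 - x) * (1 - INR c * x))); [nra|].
  apply Rmult_le_compat_l; lra.
Qed.

Lemma pow_one_minus_le_exp x n : 0 <= x <= 1 -> (1 - x) ^ n <= exp (- (INR n * x)).
Proof.
  intros Hx. replace (- (INR n * x)) with (INR n * (- x)) by ring. rewrite <- exp_pow.
  apply pow_incr. split; [lra|]. assert (H := exp_ineq1_le (- x)). lra.
Qed.

Lemma pow_one_minus_ge_exp x n : 0 <= x <= 1 ->
  exp (- (INR n * x)) * (1 - INR n * x ^ 2) <= (1 - x) ^ n.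
Proof.
  intros Hx.
  assert (H1 : exp (- x) * (1 - x ^ 2) <= 1 - x).
  { assert (h := exp_ineq1_le x).
    assert (E : exp (- x) * exp x = 1) by (rewrite <- exp_plus; replace (- x + x) with 0 by ring; apply exp_0).
    assert (0 < exp (- x)) by apply exp_pos.
    replace (1 - x ^ 2) with ((1 - x) * (1 + x)) by ring.
    assert (exp (- x) * (1 + x) <= 1) by nra.
    nra. }
  assert (H2 : (exp (- x) * (1 - x ^ 2)) ^ n <= (1 - x) ^ n).
  { apply pow_incr. split; auto. apply Rmult_le_pos; [left; apply exp_pos|]. nra. }
  rewrite Rpow_mult_distr, exp_pow in H2.
  assert (H3 := pow_one_minus_ge_lin (x ^ 2) n ltac:(split; nra)).
  replace (- (INR n * x)) with (INR n * (- x)) by ring.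
  assert (0 < exp (INR n * - x)) by apply exp_pos.
  apply (Rle_trans _ (exp (INR n * - x) * (1 - x ^ 2) ^ n)); [|auto].
  apply Rmult_le_compat_l; lra.
Qed.

Lemma pow_one_minus_ge x n c : 0 <= x <= 1 ->
  exp (- (INR n * x)) * (1 - INR n * x ^ 2 - INR c * x) <= (1 - x) ^ (n + c).
Proof.
  intros Hx. rewrite pow_add.
  assert (A := pow_one_minus_le_exp x n Hx). assert (B := pow_one_minus_ge_exp x n Hx).
  assert (C := pow_one_minus_ge_lin x c Hx).
  assert (P : 0 <= (1 - x) ^ n) by (apply pow_le; lra).
  assert (0 <= INR c) by apply pos_INR.
  apply (Rle_trans _ ((1 - x) ^ n * (1 - INR c * x))); [|apply Rmult_le_compat_l; auto].
  assert (0 <= INR c * x) by nra.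
  nra.
Qed.

(* The substitution t = u / n. *)
Lemma beta_int_scaled n s N : 0 < INR n -> 0 < s -> 0 < N ->
  Rpower (INR n) (s + 1) * beta_int s N
  = RInt (fun u => rpow u s * rpow (1 - u / INR n) N) 0 (INR n).
Proof.
  intros Hn Hs HN.
  set (f := fun t => rpow t s * rpow (1 - t) N).
  assert (E0 : / INR n * 0 + 0 = 0) by ring.
  assert (E1 : / INR n * INR n + 0 = 1) by (field; lra).
  assert (Hex : ex_RInt f (/ INR n * 0 + 0) (/ INR n * INR n + 0)) by (rewrite E0, E1; apply ex_RInt_beta; auto).
  assert (H := RInt_comp_lin (V:=R_CompleteNormedModule) f (/ INR n) 0 0 (INR n) Hex).
  rewrite E0, E1 in H. unfold beta_int. fold f. rewrite <- H, <- RInt_scal_R.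
  2:{ apply ex_RInt_continuous_all. intros x. unfold scal; simpl; unfold mult; simpl.
      apply continuous_Rmult; [apply continuous_const|].
      apply (continuous_comp (fun y => / INR n * y + 0) f);
        [apply continuous_of_ex_derive; auto_derive; auto|apply continuous_all_beta_integrand; auto]. }
  apply RInt_ext_R; [lra|]. intros u Hu. unfold scal; simpl; unfold mult; simpl. unfold f.
  replace (/ INR n * u + 0) with (/ INR n * u) by ring.
  replace (1 - / INR n * u) with (1 - u / INR n) by (field; lra).
  assert (Hi : 0 < / INR n) by (apply Rinv_0_lt_compat; lra).
  rewrite rpow_mult, (rpow_Rpower (/ INR n)) by lra.
  assert (E : Rpower (/ INR n) s = / Rpower (INR n) s).
  { unfold Rpower. rewrite ln_Rinv, <- exp_Ropp by lra. f_equal. ring. }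
  rewrite E, Rpower_plus, Rpower_1 by lra.
  assert (0 < Rpower (INR n) s) by apply exp_pos.
  field. split; lra.
Qed.

Lemma gamma_integrand_shift s j u : 0 <= u -> gamma_integrand (s + 1 + INR j) u = rpow u s * u ^ j * exp (- u).
Proof.
  intros Hu. unfold gamma_integrand. replace (s + 1 + INR j - 1) with (s + INR j) by ring.
  destruct (Rle_lt_or_eq_dec 0 u Hu) as [Hu'|<-].
  - rewrite rpow_plus, rpow_INR by lra. ring.
  - rewrite !rpow_nonpos by lra. ring.
Qed.

Section BetaAsymptotics.

Variables (s : R) (c n : nat).
Hypotheses (Hs : 0 < s) (Hn : 1 <= INR n).

Lemma continuous_all_scaled_beta_integrand :
  continuous_all (fun u => rpow u s * rpow (1 - u / INR n) (INR n + INR c)).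
Proof.
  intros u. apply continuous_Rmult; [apply continuous_rpow; auto|].
  apply continuous_rpow_comp; [generalize (pos_INR c); lra|].
  apply continuous_of_ex_derive; auto_derive; lra.
Qed.

Lemma scaled_beta_integrand_pow u : 0 < u < INR n ->
  rpow (1 - u / INR n) (INR n + INR c) = (1 - u / INR n) ^ (n + c) /\ 0 <= u / INR n <= 1.
Proof.
  intros Hu. assert (u / INR n < 1) by (apply (Rmult_lt_reg_r (INR n)); [lra|]; field_simplify; lra).
  assert (0 <= u / INR n) by (apply Rdiv_le_0_compat; lra).
  rewrite <- plus_INR, rpow_INR by lra. split; [reflexivity|lra].
Qed.

Lemma beta_int_scaled_le :
  Rpower (INR n) (s + 1) * beta_int s (INR n + INR c) <= gamma_partial (s + 1) (INR n).
Proof.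
  rewrite beta_int_scaled by (generalize (pos_INR c); lra).
  apply RInt_le; [lra|apply ex_RInt_continuous_all, continuous_all_scaled_beta_integrand
    |apply ex_RInt_gamma_integrand; lra|].
  intros u Hu. destruct (scaled_beta_integrand_pow u Hu) as [-> Hx].
  replace (gamma_integrand (s + 1) u) with (rpow u s * exp (- u))
    by (unfold gamma_integrand; do 2 f_equal; ring).
  apply Rmult_le_compat_l; [apply rpow_ge0|].
  rewrite pow_add.
  assert (h1 := pow_one_minus_le_exp (u / INR n) n Hx).
  replace (INR n * (u / INR n)) with u in h1 by (field; lra).
  assert (h2 : (1 - u / INR n) ^ c <= 1) 
    by (apply (Rle_trans _ (1 ^ c)); [apply pow_incr; lra|rewrite pow1; lra]).
  assert (h3 : 0 <= (1 - u / INR n) ^ n) by (apply pow_le; lra).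
  assert (h4 : 0 <= (1 - u / INR n) ^ c) by (apply pow_le; lra).
  nra.
Qed.

Let continuous_all_gamma_shift j : continuous_all (gamma_integrand (s + 1 + INR j)).
Proof. apply continuous_all_gamma_integrand. generalize (pos_INR j); lra. Qed.

Lemma scaled_beta_integrand_ge u : 0 < u < INR n ->
  gamma_integrand (s + 1 + INR 0) u
  - / INR n * (gamma_integrand (s + 1 + INR 2) u + INR c * gamma_integrand (s + 1 + INR 1) u)
  <= rpow u s * rpow (1 - u / INR n) (INR n + INR c).
Proof.
  intros Hu. destruct (scaled_beta_integrand_pow u Hu) as [-> Hx].
  rewrite !gamma_integrand_shift by lra.
  assert (P := pow_one_minus_ge (u / INR n) n c Hx).
  replace (INR n * (u / INR n)) with u in P by (field; lra).
  apply (Rle_trans _ (rpow u s * (exp (- u) * (1 - INR n * (u / INR n) ^ 2 - INR c * (u / INR n))))).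
  - right. simpl. field. lra.
  - apply Rmult_le_compat_l; auto. apply rpow_ge0.
Qed.

Lemma beta_int_scaled_ge :
  gamma_partial (s + 1) (INR n) - (Gamma (s + 3) + INR c * Gamma (s + 2)) * / INR n
  <= Rpower (INR n) (s + 1) * beta_int s (INR n + INR c).
Proof.
  assert (Hi : 0 < / INR n) by (apply Rinv_0_lt_compat; lra).
  assert (G2 := proj1 (Gamma_sup (s + 1 + INR 1) ltac:(simpl; lra)) (INR n) ltac:(lra)).
  assert (G3 := proj1 (Gamma_sup (s + 1 + INR 2) ltac:(simpl; lra)) (INR n) ltac:(lra)).
  pose proof (continuous_all_gamma_shift 0). pose proof (continuous_all_gamma_shift 1).
  pose proof (continuous_all_gamma_shift 2).
  rewrite beta_int_scaled by (generalize (pos_INR c); lra).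
  eapply Rle_trans; [|apply RInt_le; [lra| | |apply scaled_beta_integrand_ge]].
  2: apply ex_RInt_continuous_all; solve_continuity.
  2: apply ex_RInt_continuous_all, continuous_all_scaled_beta_integrand.
  rewrite RInt_minus_R, RInt_scal_R, RInt_plus_R, RInt_scal_R
    by (apply ex_RInt_continuous_all; solve_continuity).
  fold (gamma_partial (s + 1 + INR 0) (INR n)) (gamma_partial (s + 1 + INR 2) (INR n))
    (gamma_partial (s + 1 + INR 1) (INR n)).
  replace (s + 1 + INR 0) with (s + 1) by (simpl; ring).
  replace (s + 1 + INR 1) with (s + 2) in * by (simpl; ring).
  replace (s + 1 + INR 2) with (s + 3) in * by (simpl; ring).
  assert (hk : gamma_partial (s + 3) (INR n) + INR c * gamma_partial (s + 2) (INR n)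
               <= Gamma (s + 3) + INR c * Gamma (s + 2))
    by (apply Rplus_le_compat; [|apply Rmult_le_compat_l; [apply pos_INR|]]; auto).
  apply (Rmult_le_compat_l (/ INR n)) in hk; lra.
Qed.

End BetaAsymptotics.

Lemma is_lim_seq_inv_INR : is_lim_seq (fun n => / INR n) 0.
Proof. apply (is_lim_seq_inv INR p_infty); [apply is_lim_seq_INR|discriminate]. Qed.

Lemma beta_int_asymptotic s c : 0 < s ->
  is_lim_seq (fun n => Rpower (INR n) (s + 1) * beta_int s (INR n + INR c)) (Gamma (s + 1)).
Proof.
  intros Hs. set (K := Gamma (s + 3) + INR c * Gamma (s + 2)).
  apply (is_lim_seq_le_le_loc (fun n => gamma_partial (s + 1) (INR n) - K * / INR n) _
           (fun n => gamma_partial (s + 1) (INR n))).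
  - exists 1%nat. intros n Hn.
    assert (1 <= INR n) by (apply (le_INR 1); auto).
    split; [apply beta_int_scaled_ge|apply beta_int_scaled_le]; auto.
  - replace (Finite (Gamma (s + 1))) with (Finite (Gamma (s + 1) - K * 0)) by (f_equal; ring).
    apply is_lim_seq_minus'; [apply gamma_partial_lim; lra|].
    apply (is_lim_seq_scal_l _ K 0), is_lim_seq_inv_INR.
  - apply gamma_partial_lim; lra.
Qed.

Lemma is_lim_seq_INR_ratio c d : 0 <= c -> 0 < d -> is_lim_seq (fun n => (INR n + c) / (INR n + d)) 1.
Proof.
  intros Hc Hd.
  apply (is_lim_seq_ext_loc (fun n => (1 + c * / INR n) / (1 + d * / INR n))).
  { exists 1%nat. intros n Hn. assert (1 <= INR n) by (apply (le_INR 1); auto). field. lra. }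
  replace (Finite 1) with (Finite ((1 + c * 0) / (1 + d * 0))) by (f_equal; field).
  apply is_lim_seq_div'; [| |lra]; apply is_lim_seq_plus'; try apply is_lim_seq_const.
  - apply (is_lim_seq_scal_l _ c 0), is_lim_seq_inv_INR.
  - apply (is_lim_seq_scal_l _ d 0), is_lim_seq_inv_INR.
Qed.

Lemma beta_int_asymptotic_R s c : 0 < s -> 0 <= c ->
  is_lim_seq (fun n => Rpower (INR n) (s + 1) * beta_int s (INR n + c)) (Gamma (s + 1)).
Proof.
  intros Hs Hc. destruct (nfloor_ex c Hc) as [m [Hm1 Hm2]].
  apply (is_lim_seq_le_le_loc (fun n => Rpower (INR n) (s + 1) * beta_int s (INR n + INR (S m))) _
            (fun n => Rpower (INR n) (s + 1) * beta_int s (INR n + INR m)));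
    [|apply beta_int_asymptotic; auto|apply beta_int_asymptotic; auto].
  exists 1%nat. intros n Hn.
  assert (1 <= INR n) by (apply (le_INR 1); auto).
  assert (0 <= INR m) by apply pos_INR.
  assert (0 < Rpower (INR n) (s + 1)) by apply exp_pos.
  rewrite S_INR.
  split; apply Rmult_le_compat_l; try lra; apply beta_int_antimono; lra.
Qed.

Lemma Gamma_succ s : 0 < s -> Gamma (s + 2) = (s + 1) * Gamma (s + 1).
Proof.
  intros Hs.
  assert (H1 := beta_int_asymptotic (s + 1) 1 ltac:(lra)).
  replace (s + 1 + 1) with (s + 2) in H1 by ring.
  assert (H2 : is_lim_seq (fun n => Rpower (INR n) (s + 2) * beta_int (s + 1) (INR n + INR 1))
                 ((s + 1) * 1 * Gamma (s + 1))).
  { apply (is_lim_seq_ext_loc (fun n => (s + 1) * ((INR n + 0) / (INR n + (s + 3)))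
                                   * (Rpower (INR n) (s + 1) * beta_int s (INR n + INR 1)))).
    - exists 1%nat. intros n Hn.
      assert (1 <= INR n) by (apply (le_INR 1); auto).
      simpl (INR 1).
      replace (s + 2) with ((s + 1) + 1) by ring. rewrite (Rpower_plus (s + 1) 1), Rpower_1 by lra.
      rewrite (beta_int_succ_l s (INR n + 1)) by lra.
      assert (0 < Rpower (INR n) (s + 1)) by apply exp_pos.
      field. lra.
    - apply is_lim_seq_mult'; [|apply beta_int_asymptotic; auto].
      apply (is_lim_seq_scal_l _ (s + 1) 1), is_lim_seq_INR_ratio; lra. }
  apply is_lim_seq_unique in H1. apply is_lim_seq_unique in H2.
  rewrite H1 in H2. injection H2. intros ->. ring.
Qed.

(* Both sides satisfy the same recursion in n by [beta_int_succ_r]; at n = 0 use [beta_int_1]. *)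
Lemma beta_int_telescope p q n : 0 < p -> 0 < q ->
  beta_int p q = beta_int p (q + INR n) * beta_int q (INR n + 1) / beta_int (p + q + 1) (INR n + 1)
           * ((q + INR n + 1) * (q + INR n + 2) / ((p + q + INR n + 2) * (p + q + INR n + 3))).
Proof.
  intros Hp Hq. induction n as [|n IH].
  - simpl INR. rewrite Rplus_0_r, Rplus_0_l, !beta_int_1 by lra.
    assert (0 < beta_int p q) by (apply beta_int_pos; lra). field. lra.
  - rewrite IH, S_INR.
    replace (q + (INR n + 1)) with ((q + INR n) + 1) by ring.
    replace (INR n + 1 + 1) with ((INR n + 1) + 1) by ring.
    assert (0 <= INR n) by apply pos_INR.
    rewrite (beta_int_succ_r p (q + INR n)), (beta_int_succ_r q (INR n + 1)),
      (beta_int_succ_r (p + q + 1) (INR n + 1)) by lra.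
    assert (0 < beta_int p (q + INR n)) by (apply beta_int_pos; lra).
    assert (0 < beta_int q (INR n + 1)) by (apply beta_int_pos; lra).
    assert (0 < beta_int (p + q + 1) (INR n + 1)) by (apply beta_int_pos; lra).
    field. repeat split; lra.
Qed.

(* Let n -> oo in [beta_int_telescope], each Beta factor being scaled as in [beta_int_asymptotic_R]. *)
Lemma beta_int_Gamma p q : 0 < p -> 0 < q ->
  beta_int p q * Gamma (p + q + 2) = Gamma (p + 1) * Gamma (q + 1).
Proof.
  intros Hp Hq.
  assert (G3 : 0 < Gamma (p + q + 2)) by (apply Gamma_pos; lra).
  cut (beta_int p q = Gamma (p + 1) * Gamma (q + 1) / Gamma (p + q + 2) * 1).
  { intros ->. field. lra. }
  assert (H : is_lim_seq (fun _ => beta_int p q) (Gamma (p + 1) * Gamma (q + 1) / Gamma (p + q + 2) * 1)).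
  { apply (is_lim_seq_ext_loc (fun n =>
      (Rpower (INR n) (p + 1) * beta_int p (INR n + q)) * (Rpower (INR n) (q + 1) * beta_int q (INR n + INR 1))
      / (Rpower (INR n) (p + q + 1 + 1) * beta_int (p + q + 1) (INR n + INR 1))
      * (((INR n + (q + 1)) / (INR n + (p + q + 2))) * ((INR n + (q + 2)) / (INR n + (p + q + 3)))))).
    - exists 1%nat. intros n Hn.
      assert (1 <= INR n) by (apply (le_INR 1); auto).
      simpl (INR 1). rewrite (beta_int_telescope p q n) by auto.
      replace (p + q + 1 + 1) with ((p + 1) + (q + 1)) by ring.
      rewrite (Rpower_plus (p + 1) (q + 1) (INR n)), (Rplus_comm (INR n) q).
      assert (0 < Rpower (INR n) (p + 1)) by apply exp_pos.
      assert (0 < Rpower (INR n) (q + 1)) by apply exp_pos.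
      assert (0 < beta_int (p + q + 1) (INR n + 1)) by (apply beta_int_pos; lra).
      field. repeat split; lra.
    - apply is_lim_seq_mult'.
      + apply is_lim_seq_div'; [apply is_lim_seq_mult'| |lra].
        * apply beta_int_asymptotic_R; lra.
        * apply beta_int_asymptotic; lra.
        * replace (p + q + 2) with (p + q + 1 + 1) by ring. apply beta_int_asymptotic; lra.
      + replace 1 with (1 * 1) by ring. apply is_lim_seq_mult'; apply is_lim_seq_INR_ratio; lra. }
  apply is_lim_seq_unique in H. rewrite Lim_seq_const in H. injection H. auto.
Qed.

(** * The squared norm *)

Lemma jmass_Gamma a b : 0 < a -> 0 < b ->
  jmass a b = Rpower 2 (a + b + 1) * (Gamma (a + 1) * Gamma (b + 1) / Gamma (a + b + 2)).
Proof.
  intros Ha Hb. rewrite jmass_beta_int by auto.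
  assert (H := beta_int_Gamma b a Hb Ha).
  assert (0 < Gamma (a + b + 2)) by (apply Gamma_pos; lra).
  replace (b + a + 2) with (a + b + 2) in H by ring.
  f_equal. apply (Rmult_eq_reg_r (Gamma (a + b + 2))); [|lra].
  rewrite H. field. lra.
Qed.

Lemma jacobi_mcoef_lead_Gamma k : forall a b, 0 < a -> 0 < b ->
  jacobi_mcoef k a b k * Gamma (INR k + a + b + 1)
  = Gamma (2 * INR k + a + b + 1) / (2 ^ k * INR (Factorial.fact k)).
Proof.
  induction k as [|k IH]; intros a b Ha Hb.
  - simpl. replace (0 + a + b + 1) with (2 * 0 + a + b + 1) by ring. field.
  - rewrite jacobi_mcoef_lead_S.
    assert (Hk : 0 <= INR k) by apply pos_INR.
    assert (IH' := IH (a + 1) (b + 1) ltac:(lra) ltac:(lra)).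
    assert (HR := Gamma_succ (INR k + a + b + 1) ltac:(lra)).
    replace (INR k + (a + 1) + (b + 1) + 1) with (INR k + a + b + 1 + 2) in IH' by ring.
    replace (2 * INR k + (a + 1) + (b + 1) + 1) with (2 * INR (S k) + a + b + 1) in IH' by (rewrite S_INR; ring).
    rewrite HR in IH'.
    replace (INR k + a + b + 1 + 1) with (INR (S k) + a + b + 1) in IH' by (rewrite S_INR; ring).
    transitivity (/ 2 / INR (S k) * (jacobi_mcoef k (a + 1) (b + 1) k
      * ((INR (S k) + a + b + 1) * Gamma (INR (S k) + a + b + 1)))).
    { rewrite S_INR. unfold Rdiv. ring. }
    rewrite IH', fact_simpl, mult_INR.
    assert (INR (S k) <> 0) by (apply not_0_INR; lia).
    assert (INR (Factorial.fact k) <> 0) by apply INR_fact_neq_0.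
    assert (2 ^ k <> 0) by (apply pow_nonzero; lra).
    simpl pow. field. auto.
Qed.

Lemma hk2_jmass k a b : 0 < a -> 0 < b ->
  hk2 k a b = jacobi_mcoef k a b k * jmass (a + INR k) (b + INR k) / 2 ^ k.
Proof.
  intros Ha Hb.
  assert (Hk : 0 <= INR k) by apply pos_INR.
  assert (HR := Gamma_succ (2 * INR k + a + b) ltac:(lra)).
  assert (0 < Gamma (INR k + a + b + 1)) by (apply Gamma_pos; lra).
  assert (0 < Gamma (2 * INR k + a + b + 1)) by (apply Gamma_pos; lra).
  assert (INR (Factorial.fact k) <> 0) by apply INR_fact_neq_0.
  assert (2 ^ k <> 0) by (apply pow_nonzero; lra).
  assert (E : jacobi_mcoef k a b k = Gamma (2 * INR k + a + b + 1)
                / (2 ^ k * INR (Factorial.fact k)) / Gamma (INR k + a + b + 1)).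
  { rewrite <- jacobi_mcoef_lead_Gamma by auto. field. lra. }
  rewrite E, jmass_Gamma by lra.
  replace (a + INR k + (b + INR k) + 2) with (2 * INR k + a + b + 2) by ring. rewrite HR.
  replace (a + INR k + (b + INR k) + 1) with ((a + b + 1) + INR k + INR k) by ring.
  rewrite (Rpower_plus ((a + b + 1) + INR k) (INR k) 2), (Rpower_plus (a + b + 1) (INR k) 2), !Rpower_pow by lra.
  replace (a + INR k + 1) with (INR k + a + 1) by ring.
  replace (b + INR k + 1) with (INR k + b + 1) by ring.
  unfold hk2. field. repeat split; auto; lra.
Qed.

Theorem lemma6 (k : nat) (al be : R) :
  (1 <= k)%nat -> 0 < be -> be < al ->
  RInt (fun x => rpow (1 - x) (al + 1) * rpow (1 + x) (be + 1) * W k al be x) (-1) 1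
  = (rho_ k al be ^ 2 - eta_ al be ^ 2) * (rho_ k al be ^ 2 - sigma_ al be ^ 2)
    / (rho_ k al be * (rho_ k al be - 1)) * hk2 k al be.
Proof.
  intros Hk Hbe Hal.
  change (RInt _ (-1) 1) with (jint (al + 1) (be + 1) (W k al be)).
  rewrite jint_W, hk2_jmass by (auto; lra).
  reflexivity.
Qed.
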